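(* Let $V>0$, $r_d>0$, $k>\frac{1}{r_d}$ and $r_a=\sqrt{r_d^2-\frac{1}{k^2}}$. Consider the closed-loop system (on the region $r\ge r_a$) $$\dot r=-V\cos\theta,\qquad \dot\theta=k\left[V\cos\!\left(\pi-\sin^{-1}\!\left(\tfrac{r_a}{r}\right)\right)+V\cos\theta\right]+\frac{V\sin\theta}{r}.$$ Then $(r,\theta)=(r_d,\frac{\pi}{2})$ is a locally exponentially stable equilibrium of this system.
   Context: This system is the polar form ($r$ = distance from UAV to target, $\theta$ = bearing angle, i.e., the counterclockwise angle from the UAV-to-target vector to the heading) of unicycle dynamics $\dot x=V\cos\psi,\ \dot y=V\sin\psi,\ \dot\psi=\omega$ under the control $\omega=k[V\cos(\pi-\sin^{-1}(r_a/r))-\dot r]$ for $r\ge r_a$ (and $\omega=0$ for $r<r_a$), with $\dot r=-V\cos\theta$ substituted. $\sin^{-1}$ is the principal arcsine. *)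

From Stdlib Require Import Reals.
From Coquelicot Require Import Coquelicot.
Open Scope R_scope.

Definition r_a (rd k : R) : R := sqrt (rd ^ 2 - 1 / k ^ 2).

(* Closed-loop vector field in polar form.
   rdot = - V cos theta
   thetadot = omega + V sin theta / r, with
   omega = k [V cos(pi - asin(ra/r)) - rdot]  if r >= ra,  0 otherwise. *)
Definition omega (V k ra r th : R) : R :=
  if Rle_dec ra r then k * (V * cos (PI - asin (ra / r)) + V * cos th) else 0.

Definition f_r (V : R) (r th : R) : R := - V * cos th.
Definition f_th (V k ra : R) (r th : R) : R :=
  omega V k ra r th + V * sin th / r.

Definition is_solution (V k ra : R) (T : Rbar) (r th : R -> R) : Prop :=
  (forall t, 0 < t -> Rbar_lt t T ->
     is_derive r t (f_r V (r t) (th t)) /\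
     is_derive th t (f_th V k ra (r t) (th t))) /\
  filterlim r (at_right 0) (locally (r 0)) /\
  filterlim th (at_right 0) (locally (th 0)).

Definition dist2 (r1 th1 r2 th2 : R) : R :=
  sqrt ((r1 - r2) ^ 2 + (th1 - th2) ^ 2).

Definition locally_exp_stable (V k ra re the : R) : Prop :=
  f_r V re the = 0 /\ f_th V k ra re the = 0 /\
  exists delta c lambda, 0 < delta /\ 0 < c /\ 0 < lambda /\
    forall r0 th0, dist2 r0 th0 re the < delta ->
      (exists r th, is_solution V k ra p_infty r th /\ r 0 = r0 /\ th 0 = th0) /\
      (forall (T : Rbar) r th, is_solution V k ra T r th ->
         r 0 = r0 -> th 0 = th0 ->
         forall t, 0 <= t -> Rbar_lt t T ->
           dist2 (r t) (th t) re the <= c * dist2 r0 th0 re the * exp (- lambda * t)).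

From Stdlib Require Import Reals Lra Lia.
From Coquelicot Require Import Coquelicot.
Open Scope R_scope.

(* In the offsets x = r - rd and y = th - PI/2 the closed loop linearises to
   x' = V y, y' = - k^2 V x - k V y, for which W = (3 k^2 / 2) x^2 + k x y + y^2
   satisfies W' <= - m V (x^2 + y^2) with m = k^3 / (k^2 + 1).  Half of this margin
   absorbs the linearisation errors on a small box around the equilibrium, so there
   W' + mu W <= 0.  A barrier argument shows that a solution starting where
   W < lam rho^2 never leaves the box and satisfies W(t) <= W(0) e^(- mu t); as W is
   comparable to the squared distance, the distance decays like e^(- mu t / 2).
   Solutions on [0, +oo) exist because, inside the box, the field agrees with one in
   which r is clamped to the box, which is bounded and globally Lipschitz and hence
   integrable by Picard iteration; confinement to the box shows the clamp is never
   active. *)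

Definition lipschitz (K : R) (f : R -> R) : Prop :=
  forall t s, Rabs (f t - f s) <= K * Rabs (t - s).

Lemma continuous_eps_delta (f : R -> R) x :
  continuous f x <->
  forall e, 0 < e -> exists d, 0 < d /\ forall y, Rabs (y - x) < d -> Rabs (f y - f x) < e.
Proof.
  split.
  - intros Hf e He.
    destruct (proj1 (filterlim_locally f (f x)) Hf (mkposreal e He)) as [d Hd].
    exists d; split; [apply cond_pos | intros y Hy; exact (Hd y Hy)].
  - intros H. apply filterlim_locally. intros eps.
    destruct (H eps (cond_pos eps)) as [d [Hd H']].
    exists (mkposreal d Hd). intros y Hy. exact (H' y Hy).
Qed.

Lemma lipschitz_const K c : 0 <= K -> lipschitz K (fun _ => c).
Proof. intros HK t s. rewrite Rminus_diag, Rabs_R0. apply Rmult_le_pos; auto using Rabs_pos. Qed.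

Lemma lipschitz_continuous (h : R -> R) K : 0 <= K -> lipschitz K h -> forall t, continuous h t.
Proof.
  intros HK H t. apply continuous_eps_delta. intros e He.
  exists (e / (K + 1)). split; [apply Rdiv_lt_0_compat; lra|].
  intros y Hy. eapply Rle_lt_trans; [apply H|].
  apply Rle_lt_trans with (K * (e / (K + 1))); [apply Rmult_le_compat_l; lra|].
  apply Rlt_le_trans with ((K + 1) * (e / (K + 1))); [|right; field; lra].
  apply Rmult_lt_compat_r; [apply Rdiv_lt_0_compat|]; lra.
Qed.

Lemma continuous_at_right (f : R -> R) x :
  continuous f x -> filterlim f (at_right x) (locally (f x)).
Proof.
  intros Hf. apply filterlim_locally. intros eps.
  destruct (proj1 (continuous_eps_delta f x) Hf eps (cond_pos eps)) as [d [Hd H]].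
  exists (mkposreal d Hd). intros y Hy _. exact (H y Hy).
Qed.

Lemma nonpos_of_geometric_bound a K : (forall n, a <= K * (/ 2) ^ n) -> a <= 0.
Proof.
  intros H. destruct (Rle_dec a 0) as [h|h]; auto. exfalso.
  assert (HK : 0 < K) by (specialize (H O); simpl in H; lra).
  destruct (pow_lt_1_zero (/ 2)) with (y := a / K) as [N HN].
  - rewrite Rabs_pos_eq; lra.
  - apply Rdiv_lt_0_compat; lra.
  - specialize (HN N (le_n N)). specialize (H N).
    rewrite Rabs_pos_eq in HN by (apply pow_le; lra).
    apply (Rmult_lt_compat_l K) in HN; auto.
    replace (K * (a / K)) with a in HN by (field; lra). lra.
Qed.

Lemma Lim_seq_geometric_rate (u : nat -> R) C : 0 <= C ->
  (forall n p, Rabs (u (n + p)%nat - u n) <= C * (/ 2) ^ n) ->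
  forall n, Rabs (Lim_seq u - u n) <= C * (/ 2) ^ n.
Proof.
  intros HC H.
  assert (Hc : ex_lim_seq_cauchy u).
  { intros eps. destruct (pow_lt_1_zero (/ 2)) with (y := eps / (2 * C + 1)) as [N HN].
    { rewrite Rabs_pos_eq; lra. }
    { apply Rdiv_lt_0_compat; [apply cond_pos|lra]. }
    exists N. intros n m Hn Hm.
    assert (h1 := H N (n - N)%nat). assert (h2 := H N (m - N)%nat).
    replace (N + (n - N))%nat with n in h1 by lia.
    replace (N + (m - N))%nat with m in h2 by lia.
    specialize (HN N (le_n N)). rewrite Rabs_pos_eq in HN by (apply pow_le; lra).
    assert (0 < eps) by apply cond_pos.
    assert (HN' : (2 * C + 1) * (/ 2) ^ N < eps).
    { apply Rmult_lt_compat_l with (r := 2 * C + 1) in HN; [|lra].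
      replace ((2 * C + 1) * (eps / (2 * C + 1))) with (pos eps) in HN by (field; lra). lra. }
    assert (0 <= (/ 2) ^ N) by (apply pow_le; lra).
    replace (u n - u m) with ((u n - u N) - (u m - u N)) by ring.
    eapply Rle_lt_trans; [apply Rabs_triang|]. rewrite Rabs_Ropp. nra. }
  apply ex_lim_seq_cauchy_corr, Lim_seq_correct', is_lim_seq_Reals in Hc.
  intros n. destruct (Rle_dec (Rabs (Lim_seq u - u n)) (C * (/ 2) ^ n)) as [h|h]; auto.
  exfalso. destruct (Hc (Rabs (Lim_seq u - u n) - C * (/ 2) ^ n)) as [M HM]; [lra|].
  specialize (HM (n + M)%nat ltac:(lia)). specialize (H n M). unfold R_dist in HM.
  assert (Rabs (Lim_seq u - u n)
          <= Rabs (u (n + M)%nat - Lim_seq u) + Rabs (u (n + M)%nat - u n)).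
  { replace (Lim_seq u - u n) with (- (u (n + M)%nat - Lim_seq u) + (u (n + M)%nat - u n)) by ring.
    eapply Rle_trans; [apply Rabs_triang|]. rewrite Rabs_Ropp. lra. }
  lra.
Qed.

Lemma ex_RInt_continuous_R (f : R -> R) :
  (forall t, continuous f t) -> forall a b, ex_RInt f a b.
Proof. intros. apply (ex_RInt_continuous (V := R_CompleteNormedModule)); auto. Qed.

Lemma RInt_lipschitz (g : R -> R) B :
  (forall a b, ex_RInt g a b) -> (forall u, Rabs (g u) <= B) -> lipschitz B (fun t => RInt g 0 t).
Proof.
  intros Hex HB t s.
  rewrite <- (RInt_Chasles g 0 s t (Hex _ _) (Hex _ _)).
  change (Rabs (RInt g 0 s + RInt g s t - RInt g 0 s) <= B * Rabs (t - s)).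
  rewrite Rplus_minus_l.
  destruct (Rle_dec s t).
  - rewrite (Rabs_pos_eq (t - s)), Rmult_comm by lra. apply abs_RInt_le_const; auto.
  - rewrite <- opp_RInt_swap by auto. change (Rabs (- RInt g t s) <= B * Rabs (t - s)).
    rewrite Rabs_Ropp, (Rabs_left (t - s)) by lra.
    replace (- (t - s)) with (s - t) by ring.
    rewrite Rmult_comm. apply abs_RInt_le_const; auto; lra.
Qed.

Lemma RInt_scal_exp (c K t : R) : 0 < K ->
  RInt (fun s => c * exp (K * s)) 0 t = c * (exp (K * t) - 1) / K.
Proof.
  intros HK. apply is_RInt_unique.
  replace (c * (exp (K * t) - 1) / K) with (minus (c * exp (K * t) / K) (c * exp (K * 0) / K)).
  - apply (is_RInt_derive (V := R_CompleteNormedModule) (fun s => c * exp (K * s) / K)).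
    + intros x _. auto_derive; auto. field. lra.
    + intros x _. apply (ex_derive_continuous (fun s => c * exp (K * s))). auto_derive. auto.
  - change (c * exp (K * t) / K - c * exp (K * 0) / K = c * (exp (K * t) - 1) / K).
    rewrite Rmult_0_r, exp_0. field. lra.
Qed.

Lemma continuous_Rabs_minus (f g : R -> R) t :
  continuous f t -> continuous g t -> continuous (fun s => Rabs (f s - g s)) t.
Proof. intros Hf Hg. apply continuous_Rabs_comp. exact (continuous_minus f g t Hf Hg). Qed.

Lemma continuous_Rmult_l (c : R) (f : R -> R) t :
  continuous f t -> continuous (fun s => c * f s) t.
Proof. intros Hf. exact (continuous_scal_r c f t Hf). Qed.

Lemma is_derive_of_integral_equation (Z G : R -> R) z0 t : 0 < t ->
  (forall s, continuous G s) -> (forall u, 0 <= u -> Z u = z0 + RInt G 0 u) ->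
  is_derive Z t (G t).
Proof.
  intros Ht Hc HZ.
  apply is_derive_ext_loc with (f := fun u => plus z0 (RInt G 0 u)).
  - exists (mkposreal t Ht). intros u Hu. change (Rabs (u - t) < t) in Hu.
    rewrite HZ; [reflexivity|]. unfold Rabs in Hu; destruct Rcase_abs in Hu; lra.
  - rewrite <- (plus_zero_l (G t)).
    apply (is_derive_plus (fun _ : R => z0) (fun u => RInt G 0 u) t zero (G t));
      [apply is_derive_const|].
    apply is_derive_RInt with (a := 0). exists (mkposreal 1 Rlt_0_1). intros u _.
    apply (RInt_correct (V := R_CompleteNormedModule)). apply ex_RInt_continuous_R; auto.
    apply Hc.
Qed.

(** * Picard iteration for bounded Lipschitz planar fields *)

Section Picard.
Variables (F1 F2 : R -> R -> R) (B L x0 y0 : R).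
Hypothesis hB : 0 < B.
Hypothesis hL : 0 < L.
Hypothesis F1_bounded : forall a b, Rabs (F1 a b) <= B.
Hypothesis F2_bounded : forall a b, Rabs (F2 a b) <= B.
Hypothesis F_lipschitz : forall a b a' b',
  Rabs (F1 a b - F1 a' b') + Rabs (F2 a b - F2 a' b') <= L * (Rabs (a - a') + Rabs (b - b')).

Lemma F1_lipschitz a b a' b' : Rabs (F1 a b - F1 a' b') <= L * (Rabs (a - a') + Rabs (b - b')).
Proof. generalize (F_lipschitz a b a' b') (Rabs_pos (F2 a b - F2 a' b')); lra. Qed.

Lemma F2_lipschitz a b a' b' : Rabs (F2 a b - F2 a' b') <= L * (Rabs (a - a') + Rabs (b - b')).
Proof. generalize (F_lipschitz a b a' b') (Rabs_pos (F1 a b - F1 a' b')); lra. Qed.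

Lemma continuous_lipschitz_comp (F : R -> R -> R) (X Y : R -> R) K :
  (forall a b a' b', Rabs (F a b - F a' b') <= L * (Rabs (a - a') + Rabs (b - b'))) ->
  0 <= K -> lipschitz K X -> lipschitz K Y ->
  forall t, continuous (fun s => F (X s) (Y s)) t.
Proof.
  intros HF HK HX HY. apply lipschitz_continuous with (L * (2 * K)); [nra|].
  intros t s. eapply Rle_trans; [apply HF|].
  replace (L * (2 * K) * Rabs (t - s)) with (L * (K * Rabs (t - s) + K * Rabs (t - s))) by ring.
  apply Rmult_le_compat_l; [lra | apply Rplus_le_compat; auto].
Qed.

Fixpoint picard (n : nat) : (R -> R) * (R -> R) :=
  match n with
  | O => (fun _ => x0, fun _ => y0)
  | S m => (fun t => x0 + RInt (fun s => F1 (fst (picard m) s) (snd (picard m) s)) 0 t,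
            fun t => y0 + RInt (fun s => F2 (fst (picard m) s) (snd (picard m) s)) 0 t)
  end.

Definition picard_x n := fst (picard n).
Definition picard_y n := snd (picard n).
Definition drift1 n s := F1 (picard_x n s) (picard_y n s).
Definition drift2 n s := F2 (picard_x n s) (picard_y n s).

Lemma picard_x_S n t : picard_x (S n) t = x0 + RInt (drift1 n) 0 t.
Proof. reflexivity. Qed.

Lemma picard_y_S n t : picard_y (S n) t = y0 + RInt (drift2 n) 0 t.
Proof. reflexivity. Qed.

Lemma picard_x_0 n : picard_x n 0 = x0.
Proof. destruct n; [reflexivity|]. rewrite picard_x_S, RInt_point. apply Rplus_0_r. Qed.

Lemma picard_y_0 n : picard_y n 0 = y0.
Proof. destruct n; [reflexivity|]. rewrite picard_y_S, RInt_point. apply Rplus_0_r. Qed.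

Lemma picard_lipschitz n : lipschitz B (picard_x n) /\ lipschitz B (picard_y n).
Proof.
  induction n as [|n [IHX IHY]].
  - split; exact (lipschitz_const B _ (Rlt_le _ _ hB)).
  - assert (C1 := continuous_lipschitz_comp F1 _ _ B F1_lipschitz (Rlt_le _ _ hB) IHX IHY).
    assert (C2 := continuous_lipschitz_comp F2 _ _ B F2_lipschitz (Rlt_le _ _ hB) IHX IHY).
    split; intros t s.
    + rewrite !picard_x_S, Rminus_plus_l_l.
      apply RInt_lipschitz; [apply ex_RInt_continuous_R, C1 | intros; apply F1_bounded].
    + rewrite !picard_y_S, Rminus_plus_l_l.
      apply RInt_lipschitz; [apply ex_RInt_continuous_R, C2 | intros; apply F2_bounded].
Qed.

Lemma drift1_continuous n t : continuous (drift1 n) t.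
Proof. destruct (picard_lipschitz n). apply continuous_lipschitz_comp with B; auto using F1_lipschitz; lra. Qed.

Lemma drift2_continuous n t : continuous (drift2 n) t.
Proof. destruct (picard_lipschitz n). apply continuous_lipschitz_comp with B; auto using F2_lipschitz; lra. Qed.

Definition picard_gap n t :=
  Rabs (picard_x (S n) t - picard_x n t) + Rabs (picard_y (S n) t - picard_y n t).

Lemma picard_gap_continuous n t : continuous (picard_gap n) t.
Proof.
  destruct (picard_lipschitz n) as [X1 Y1], (picard_lipschitz (S n)) as [X2 Y2].
  assert (HB0 : 0 <= B) by lra.
  apply (continuous_plus (fun s => Rabs (picard_x (S n) s - picard_x n s)));
    apply continuous_Rabs_minus; apply lipschitz_continuous with B; auto.
Qed.

Lemma RInt_drift_diff (d : nat -> R -> R) n t :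
  (forall m s, continuous (d m) s) ->
  RInt (d (S n)) 0 t - RInt (d n) 0 t = RInt (fun s => d (S n) s - d n s) 0 t.
Proof.
  intros Hc. symmetry.
  apply (RInt_minus (V := R_CompleteNormedModule)); apply ex_RInt_continuous_R; auto.
Qed.

Lemma picard_gap_S n t : 0 <= t ->
  picard_gap (S n) t <= RInt (fun s => L * picard_gap n s) 0 t.
Proof.
  intros Ht. unfold picard_gap at 1.
  rewrite !picard_x_S, !picard_y_S, !Rminus_plus_l_l.
  rewrite (RInt_drift_diff drift1) by exact drift1_continuous.
  rewrite (RInt_drift_diff drift2) by exact drift2_continuous.
  assert (Hd1 : forall s, continuous (fun s => drift1 (S n) s - drift1 n s) s).
  { intros s. exact (continuous_minus _ _ s (drift1_continuous _ s) (drift1_continuous _ s)). }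
  assert (Hd2 : forall s, continuous (fun s => drift2 (S n) s - drift2 n s) s).
  { intros s. exact (continuous_minus _ _ s (drift2_continuous _ s) (drift2_continuous _ s)). }
  assert (Hc1 : forall s, continuous (fun s => Rabs (drift1 (S n) s - drift1 n s)) s).
  { intros s. apply continuous_Rabs_comp, Hd1. }
  assert (Hc2 : forall s, continuous (fun s => Rabs (drift2 (S n) s - drift2 n s)) s).
  { intros s. apply continuous_Rabs_comp, Hd2. }
  eapply Rle_trans.
  { apply Rplus_le_compat; apply abs_RInt_le; auto; apply ex_RInt_continuous_R; auto. }
  rewrite <- (RInt_plus (V := R_CompleteNormedModule)) by (apply ex_RInt_continuous_R; auto).
  apply RInt_le; auto.
  - apply ex_RInt_continuous_R. intros s. apply (continuous_plus (fun s => Rabs _)); auto.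
  - apply ex_RInt_continuous_R. intros s. apply continuous_Rmult_l, picard_gap_continuous.
  - intros s _. apply F_lipschitz.
Qed.

Lemma picard_gap_bound n t : 0 <= t -> picard_gap n t <= B / L * (/ 2) ^ n * exp (2 * L * t).
Proof.
  revert t. induction n as [|n IH]; intros t Ht.
  - unfold picard_gap. rewrite picard_x_S, picard_y_S, !Rplus_minus_l.
    assert (E1 : Rabs (RInt (drift1 0) 0 t) <= (t - 0) * B).
    { apply abs_RInt_le_const; auto; [exact (ex_RInt_const 0 t (F1 x0 y0)) | intros; apply F1_bounded]. }
    assert (E2 : Rabs (RInt (drift2 0) 0 t) <= (t - 0) * B).
    { apply abs_RInt_le_const; auto; [exact (ex_RInt_const 0 t (F2 x0 y0)) | intros; apply F2_bounded]. }
    assert (E3 := exp_ineq1_le (2 * L * t)).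
    assert (0 < B / L) by (apply Rdiv_lt_0_compat; lra).
    assert (B / L * (1 + 2 * L * t) <= B / L * exp (2 * L * t)) by (apply Rmult_le_compat_l; lra).
    replace (B / L * (1 + 2 * L * t)) with (B / L + 2 * B * t) in * by (field; lra).
    simpl pow. lra.
  - eapply Rle_trans; [exact (picard_gap_S n t Ht)|].
    apply Rle_trans with (RInt (fun s => B * (/ 2) ^ n * exp (2 * L * s)) 0 t).
    { apply RInt_le; auto.
      - apply ex_RInt_continuous_R. intros s. apply continuous_Rmult_l, picard_gap_continuous.
      - apply ex_RInt_continuous_R. intros s. apply continuous_Rmult_l.
        apply (ex_derive_continuous (fun s => exp (2 * L * s))). auto_derive. auto.
      - intros s Hs.
        replace (B * (/ 2) ^ n * exp (2 * L * s)) with (L * (B / L * (/ 2) ^ n * exp (2 * L * s)))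
          by (field; lra).
        apply Rmult_le_compat_l; [lra | apply IH; lra]. }
    rewrite RInt_scal_exp by lra. simpl pow.
    assert (0 < exp (2 * L * t)) by apply exp_pos.
    assert (0 < B * (/ 2) ^ n / (2 * L)).
    { apply Rdiv_lt_0_compat; [apply Rmult_lt_0_compat; [|apply pow_lt]|]; lra. }
    replace (B * (/ 2) ^ n * (exp (2 * L * t) - 1) / (2 * L)) with
      (B / L * (/ 2 * (/ 2) ^ n) * exp (2 * L * t) - B * (/ 2) ^ n / (2 * L)) by (field; lra).
    lra.
Qed.

Definition picard_rate t := 2 * (B / L) * exp (2 * L * t).

Lemma picard_rate_pos t : 0 < picard_rate t.
Proof.
  unfold picard_rate. assert (0 < exp (2 * L * t)) by apply exp_pos.
  assert (0 < B / L) by (apply Rdiv_lt_0_compat; lra). nra.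
Qed.

Lemma picard_rate_le s t : s <= t -> picard_rate s <= picard_rate t.
Proof.
  intros Hst. unfold picard_rate. apply Rmult_le_compat_l.
  - assert (0 < B / L) by (apply Rdiv_lt_0_compat; lra). lra.
  - destruct (Req_dec s t) as [->|]; [lra|]. apply Rlt_le, exp_increasing. nra.
Qed.

Lemma picard_cauchy n p t : 0 <= t ->
  Rabs (picard_x (n + p) t - picard_x n t) + Rabs (picard_y (n + p) t - picard_y n t)
  <= picard_rate t * ((/ 2) ^ n - (/ 2) ^ (n + p)).
Proof.
  intros Ht. unfold picard_rate. induction p as [|p IH].
  - rewrite Nat.add_0_r, !Rminus_diag, Rabs_R0. lra.
  - replace (n + S p)%nat with (S (n + p)) by lia.
    assert (HD := picard_gap_bound (n + p) t Ht). unfold picard_gap in HD.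
    assert (T1 := R_dist_tri (picard_x (S (n + p)) t) (picard_x n t) (picard_x (n + p) t)).
    assert (T2 := R_dist_tri (picard_y (S (n + p)) t) (picard_y n t) (picard_y (n + p) t)).
    unfold R_dist in T1, T2.
    simpl pow at 2. assert (0 < exp (2 * L * t)) by apply exp_pos.
    assert (0 < B / L) by (apply Rdiv_lt_0_compat; lra).
    replace (2 * (B / L) * exp (2 * L * t) * ((/ 2) ^ n - / 2 * (/ 2) ^ (n + p))) with
      (2 * (B / L) * exp (2 * L * t) * ((/ 2) ^ n - (/ 2) ^ (n + p))
       + B / L * (/ 2) ^ (n + p) * exp (2 * L * t)) by (field; lra).
    lra.
Qed.

Definition sol_x t : R := Lim_seq (fun n => picard_x n (Rmax 0 t)).
Definition sol_y t : R := Lim_seq (fun n => picard_y n (Rmax 0 t)).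

Lemma sol_x_approx t n :
  Rabs (sol_x t - picard_x n (Rmax 0 t)) <= picard_rate (Rmax 0 t) * (/ 2) ^ n.
Proof.
  apply (Lim_seq_geometric_rate (fun m => picard_x m (Rmax 0 t))); [apply Rlt_le, picard_rate_pos|].
  intros m p. assert (H := picard_cauchy m p _ (Rmax_l 0 t)).
  assert (0 < (/ 2) ^ (m + p)) by (apply pow_lt; lra).
  assert (0 <= Rabs (picard_y (m + p) (Rmax 0 t) - picard_y m (Rmax 0 t))) by apply Rabs_pos.
  assert (0 < picard_rate (Rmax 0 t)) by apply picard_rate_pos. nra.
Qed.

Lemma sol_y_approx t n :
  Rabs (sol_y t - picard_y n (Rmax 0 t)) <= picard_rate (Rmax 0 t) * (/ 2) ^ n.
Proof.
  apply (Lim_seq_geometric_rate (fun m => picard_y m (Rmax 0 t))); [apply Rlt_le, picard_rate_pos|].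
  intros m p. assert (H := picard_cauchy m p _ (Rmax_l 0 t)).
  assert (0 < (/ 2) ^ (m + p)) by (apply pow_lt; lra).
  assert (0 <= Rabs (picard_x (m + p) (Rmax 0 t) - picard_x m (Rmax 0 t))) by apply Rabs_pos.
  assert (0 < picard_rate (Rmax 0 t)) by apply picard_rate_pos. nra.
Qed.

Lemma sol_x_0 : sol_x 0 = x0.
Proof.
  unfold sol_x. rewrite Rmax_left by lra.
  rewrite (Lim_seq_ext _ (fun _ => x0)), Lim_seq_const; [reflexivity | apply picard_x_0].
Qed.

Lemma sol_y_0 : sol_y 0 = y0.
Proof.
  unfold sol_y. rewrite Rmax_left by lra.
  rewrite (Lim_seq_ext _ (fun _ => y0)), Lim_seq_const; [reflexivity | apply picard_y_0].
Qed.

Lemma Rmax_0_lipschitz : lipschitz 1 (Rmax 0).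
Proof.
  intros t s. rewrite Rmult_1_l. unfold Rmax.
  destruct (Rle_dec 0 t), (Rle_dec 0 s); unfold Rabs; repeat destruct Rcase_abs; lra.
Qed.

Lemma limit_lipschitz (Z : R -> R) (P : nat -> R -> R) :
  (forall n, lipschitz B (P n)) ->
  (forall t n, Rabs (Z t - P n (Rmax 0 t)) <= picard_rate (Rmax 0 t) * (/ 2) ^ n) ->
  lipschitz B Z.
Proof.
  intros HP HZ t s.
  enough (Rabs (Z t - Z s) - B * Rabs (t - s) <= 0) by lra.
  apply nonpos_of_geometric_bound with (picard_rate (Rmax 0 t) + picard_rate (Rmax 0 s)).
  intros n.
  assert (h1 := HZ t n). assert (h2 := HZ s n). assert (h3 := HP n (Rmax 0 t) (Rmax 0 s)).
  assert (h4 := Rmax_0_lipschitz t s). rewrite Rmult_1_l in h4.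
  assert (B * Rabs (Rmax 0 t - Rmax 0 s) <= B * Rabs (t - s)) by (apply Rmult_le_compat_l; lra).
  assert (h5 := R_dist_tri (Z t) (Z s) (P n (Rmax 0 t))).
  assert (h6 := R_dist_tri (P n (Rmax 0 t)) (Z s) (P n (Rmax 0 s))).
  unfold R_dist in h5, h6. rewrite (Rabs_minus_sym (P n (Rmax 0 s))) in h6.
  lra.
Qed.

Lemma sol_x_lipschitz : lipschitz B sol_x.
Proof. apply (limit_lipschitz sol_x picard_x); [intros n; apply picard_lipschitz | apply sol_x_approx]. Qed.

Lemma sol_y_lipschitz : lipschitz B sol_y.
Proof. apply (limit_lipschitz sol_y picard_y); [intros n; apply picard_lipschitz | apply sol_y_approx]. Qed.

Lemma sol_drift1_continuous t : continuous (fun s => F1 (sol_x s) (sol_y s)) t.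
Proof. apply continuous_lipschitz_comp with B; auto using F1_lipschitz, sol_x_lipschitz, sol_y_lipschitz; lra. Qed.

Lemma sol_drift2_continuous t : continuous (fun s => F2 (sol_x s) (sol_y s)) t.
Proof. apply continuous_lipschitz_comp with B; auto using F2_lipschitz, sol_x_lipschitz, sol_y_lipschitz; lra. Qed.

Lemma limit_integral_equation (F : R -> R -> R) (Z : R -> R) (P : nat -> R -> R) z0 t :
  (forall a b a' b', Rabs (F a b - F a' b') <= L * (Rabs (a - a') + Rabs (b - b'))) ->
  (forall n s, continuous (fun u => F (picard_x n u) (picard_y n u)) s) ->
  (forall s, continuous (fun u => F (sol_x u) (sol_y u)) s) ->
  (forall n u, P (S n) u = z0 + RInt (fun s => F (picard_x n s) (picard_y n s)) 0 u) ->
  (forall u n, Rabs (Z u - P n (Rmax 0 u)) <= picard_rate (Rmax 0 u) * (/ 2) ^ n) ->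
  0 <= t -> Z t = z0 + RInt (fun s => F (sol_x s) (sol_y s)) 0 t.
Proof.
  intros HF HcP HcZ HP HZ Ht.
  set (G := fun s => F (sol_x s) (sol_y s)).
  enough (Rabs (Z t - (z0 + RInt G 0 t)) <= 0) by (apply Rminus_diag_uniq, Rabs_eq_0; generalize (Rabs_pos (Z t - (z0 + RInt G 0 t))); lra).
  apply nonpos_of_geometric_bound with (picard_rate t + t * (L * (2 * picard_rate t))).
  intros n.
  assert (E : Z t - (z0 + RInt G 0 t) =
    (Z t - P (S n) t) + RInt (fun s => F (picard_x n s) (picard_y n s) - G s) 0 t).
  { rewrite (RInt_minus (V := R_CompleteNormedModule) (fun s => F (picard_x n s) (picard_y n s)) G)
      by (apply ex_RInt_continuous_R; auto).
    rewrite HP. change (Z t - (z0 + RInt G 0 t) = Z t - (z0 + RInt (fun s => F (picard_x n s) (picard_y n s)) 0 t)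
      + (RInt (fun s => F (picard_x n s) (picard_y n s)) 0 t - RInt G 0 t)). ring. }
  rewrite E. eapply Rle_trans; [apply Rabs_triang|].
  assert (h1 := HZ t (S n)). rewrite Rmax_right in h1 by lra. simpl pow in h1.
  assert (h2 : Rabs (RInt (fun s => F (picard_x n s) (picard_y n s) - G s) 0 t)
               <= (t - 0) * (L * (2 * picard_rate t) * (/ 2) ^ n)).
  { apply abs_RInt_le_const; [lra| |].
    - apply ex_RInt_continuous_R. intros s. exact (continuous_minus _ _ _ (HcP n s) (HcZ s)).
    - intros s Hs. eapply Rle_trans; [apply HF|].
      rewrite Rmult_assoc. apply Rmult_le_compat_l; [lra|].
      assert (k1 := sol_x_approx s n). assert (k2 := sol_y_approx s n).
      rewrite Rmax_right in k1, k2 by lra. rewrite Rabs_minus_sym in k1, k2.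
      assert (picard_rate s <= picard_rate t) by (apply picard_rate_le; lra).
      assert (0 < (/ 2) ^ n) by (apply pow_lt; lra). nra. }
  assert (0 < picard_rate t) by apply picard_rate_pos.
  assert (0 < (/ 2) ^ n) by (apply pow_lt; lra). nra.
Qed.

Theorem picard_solution : exists X Y : R -> R, X 0 = x0 /\ Y 0 = y0 /\
  (forall t, continuous X t) /\ (forall t, continuous Y t) /\
  (forall t, 0 < t -> is_derive X t (F1 (X t) (Y t)) /\ is_derive Y t (F2 (X t) (Y t))).
Proof.
  exists sol_x, sol_y. split; [apply sol_x_0|]. split; [apply sol_y_0|].
  split; [apply lipschitz_continuous with B; [lra | apply sol_x_lipschitz]|].
  split; [apply lipschitz_continuous with B; [lra | apply sol_y_lipschitz]|].
  intros t Ht. split.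
  - apply (is_derive_of_integral_equation sol_x (fun s => F1 (sol_x s) (sol_y s)) x0);
      auto using sol_drift1_continuous.
    intros u Hu. apply (limit_integral_equation F1 sol_x picard_x x0 u F1_lipschitz
      drift1_continuous sol_drift1_continuous); auto using sol_x_approx.
  - apply (is_derive_of_integral_equation sol_y (fun s => F2 (sol_x s) (sol_y s)) y0);
      auto using sol_drift2_continuous.
    intros u Hu. apply (limit_integral_equation F2 sol_y picard_y y0 u F2_lipschitz
      drift2_continuous sol_drift2_continuous); auto using sol_y_approx.
Qed.

End Picard.

(** * Lyapunov decay along trajectories *)

Lemma le_of_Derive_nonpos_right (U : R -> R) a b : a < b -> continuous U a ->
  (forall s, a < s <= b -> ex_derive U s /\ Derive U s <= 0) -> U b <= U a.
Proof.
  intros Hab Hc Hd.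
  destruct (Rle_dec (U b) (U a)) as [q|q]; auto. exfalso.
  destruct (proj1 (continuous_eps_delta U a) Hc (U b - U a)) as [d [Hd0 Hd1]]; [lra|].
  set (a' := a + Rmin d (b - a) / 2).
  assert (Hm1 := Rmin_l d (b - a)). assert (Hm2 := Rmin_r d (b - a)).
  assert (0 < Rmin d (b - a)) by (apply Rmin_glb_lt; lra).
  assert (Ha' : a < a' < b) by (unfold a'; lra).
  assert (Hclose := Hd1 a' ltac:(rewrite Rabs_pos_eq; unfold a'; lra)).
  destruct (MVT_gen U a' b (Derive U)) as [c [Hc1 Hc2]].
  - intros x Hx. rewrite Rmin_left, Rmax_right in Hx by lra.
    apply Derive_correct, Hd. lra.
  - intros x Hx. rewrite Rmin_left, Rmax_right in Hx by lra.
    apply continuity_pt_filterlim, (ex_derive_continuous (K := R_AbsRing) (V := R_NormedModule)), Hd.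
    lra.
  - rewrite Rmin_left, Rmax_right in Hc1 by lra.
    assert (Derive U c * (b - a') <= 0) by (apply Rmult_le_0_r; [apply Hd|]; lra).
    unfold Rabs in Hclose; destruct Rcase_abs in Hclose; lra.
Qed.

(* The supremum of the times up to which [U <= 0] is attained by continuity;
   if it were below [t1], [U] would still be nonpositive slightly to its right. *)
Lemma nonpos_propagates (U : R -> R) (t1 : R) : 0 <= t1 -> U 0 <= 0 ->
  (forall t, 0 <= t <= t1 -> continuous U t) ->
  (forall t, 0 <= t < t1 -> U t <= 0 -> exists eta, 0 < eta /\
     forall s, t < s < t + eta -> s <= t1 -> ex_derive U s /\ Derive U s <= 0) ->
  U t1 <= 0.
Proof.
  intros Ht1 H0 Hc Hd.
  destruct (Rle_dec (U t1) 0) as [h|h]; auto. exfalso.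
  set (Z := fun s => 0 <= s <= t1 /\ U s <= 0).
  destruct (completeness Z) as [a [Hub Hlub]].
  { exists t1. intros s [Hs _]. lra. }
  { exists 0. split; lra. }
  assert (Ha0 : 0 <= a) by (apply Hub; split; lra).
  assert (Ha1 : a <= t1) by (apply Hlub; intros s [Hs _]; lra).
  assert (HUa : U a <= 0).
  { destruct (Rle_dec (U a) 0) as [h'|h']; auto. exfalso.
    destruct (proj1 (continuous_eps_delta U a) (Hc a (conj Ha0 Ha1)) (U a)) as [d [Hd0 Hd1]]; [lra|].
    enough (is_upper_bound Z (a - d)) by (specialize (Hlub _ H); lra).
    intros s [Hs Hus]. destruct (Rle_dec s (a - d)) as [q|q]; auto. exfalso.
    assert (s <= a) by (apply Hub; split; auto).
    specialize (Hd1 s ltac:(unfold Rabs; destruct Rcase_abs; lra)).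
    unfold Rabs in Hd1; destruct Rcase_abs in Hd1; lra. }
  assert (Hat : a < t1) by (destruct (Req_dec a t1); subst; lra).
  destruct (Hd a (conj Ha0 Hat) HUa) as [eta [Heta Hder]].
  set (b := a + Rmin eta (t1 - a) / 2).
  assert (Hm1 := Rmin_l eta (t1 - a)). assert (Hm2 := Rmin_r eta (t1 - a)).
  assert (0 < Rmin eta (t1 - a)) by (apply Rmin_glb_lt; lra).
  assert (Hb : a < b <= t1) by (unfold b; lra).
  assert (U b <= U a).
  { apply le_of_Derive_nonpos_right; [lra | apply Hc; lra|].
    intros s Hs. apply Hder; unfold b in *; lra. }
  assert (b <= a) by (apply Hub; split; lra).
  lra.
Qed.

Lemma continuous_Rmax_0_at_0 (r : R -> R) : filterlim r (at_right 0) (locally (r 0)) ->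
  continuous (fun t => r (Rmax 0 t)) 0.
Proof.
  intros H. apply continuous_eps_delta. intros e He.
  destruct (proj1 (filterlim_locally r (r 0)) H (mkposreal e He)) as [d Hd].
  exists d. split; [apply cond_pos|]. intros y Hy. rewrite (Rmax_left 0 0) by lra.
  destruct (Rle_dec y 0).
  - rewrite Rmax_left, Rminus_diag, Rabs_R0 by lra. lra.
  - rewrite Rmax_right by lra. apply (Hd y); [exact Hy | lra].
Qed.

Lemma continuous_Rmax_0 (r : R -> R) t : 0 < t -> continuous r t ->
  continuous (fun s => r (Rmax 0 s)) t.
Proof.
  intros Ht H. apply continuous_eps_delta. intros e He.
  destruct (proj1 (continuous_eps_delta r t) H e He) as [d [Hd H']].
  exists (Rmin d t). split; [apply Rmin_glb_lt; lra|]. intros y Hy.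
  assert (Hm1 := Rmin_l d t). assert (Hm2 := Rmin_r d t).
  rewrite (Rmax_right 0 t), Rmax_right by (try unfold Rabs in Hy; try destruct Rcase_abs in Hy; lra).
  apply H'. lra.
Qed.

Lemma is_derive_Rmax_0 (r : R -> R) t l : 0 < t -> is_derive r t l ->
  is_derive (fun s => r (Rmax 0 s)) t l.
Proof.
  intros Ht H. apply is_derive_ext_loc with r; auto.
  exists (mkposreal t Ht). intros y Hy. change (Rabs (y - t) < t) in Hy.
  rewrite Rmax_right; auto. unfold Rabs in Hy; destruct Rcase_abs in Hy; lra.
Qed.

Definition quad_form (c1 c2 x y : R) : R := c1 * x ^ 2 + c2 * x * y + y ^ 2.

Lemma continuous_Rmult (f g : R -> R) t :
  continuous f t -> continuous g t -> continuous (fun s => f s * g s) t.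
Proof. intros Hf Hg. exact (continuous_mult f g t Hf Hg). Qed.

Lemma continuous_quad_form c1 c2 (a b : R -> R) t : continuous a t -> continuous b t ->
  continuous (fun s => quad_form c1 c2 (a s) (b s)) t.
Proof.
  intros Ha Hb. unfold quad_form. simpl pow.
  assert (Hc : forall c : R, continuous (fun _ : R => c) t) by (intros; apply continuous_const).
  apply (continuous_plus (fun s => c1 * (a s * (a s * 1)) + c2 * a s * b s)).
  - apply (continuous_plus (fun s => c1 * (a s * (a s * 1))));
      repeat apply continuous_Rmult; auto.
  - repeat apply continuous_Rmult; auto.
Qed.

Lemma is_derive_quad_form_exp c1 c2 mu x0 y0 w (a b : R -> R) s da db :
  is_derive a s da -> is_derive b s db ->
  is_derive (fun s => quad_form c1 c2 (a s - x0) (b s - y0) * exp (mu * s) - w) s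
   (((2 * c1 * (a s - x0) + c2 * (b s - y0)) * da + (c2 * (a s - x0) + 2 * (b s - y0)) * db
     + mu * quad_form c1 c2 (a s - x0) (b s - y0)) * exp (mu * s)).
Proof.
  intros Ha Hb. unfold quad_form. auto_derive.
  - repeat split; eexists; eassumption.
  - change (Derive (fun x => a x) s) with (Derive a s).
    change (Derive (fun x => b x) s) with (Derive b s).
    rewrite (is_derive_unique a s da Ha), (is_derive_unique b s db Hb). ring.
Qed.

Section Lyapunov.
Variables (rd th0 c1 c2 mu lam Lam rho : R) (f1 f2 : R -> R -> R).
Hypothesis hmu : 0 < mu.
Hypothesis hlam : 0 < lam.
Hypothesis hrho : 0 < rho.
Hypothesis hLam : 0 < Lam.

Local Notation W r th := (quad_form c1 c2 (r - rd) (th - th0)).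

Hypothesis W_coercive : forall r th, lam * ((r - rd) ^ 2 + (th - th0) ^ 2) <= W r th.
Hypothesis W_dominated : forall r th, W r th <= Lam * ((r - rd) ^ 2 + (th - th0) ^ 2).
Hypothesis W_decrease : forall r th, Rabs (r - rd) <= rho -> Rabs (th - th0) <= rho ->
  (2 * c1 * (r - rd) + c2 * (th - th0)) * f1 r th + (c2 * (r - rd) + 2 * (th - th0)) * f2 r th
  + mu * W r th <= 0.

Lemma W_nonneg r th : 0 <= W r th.
Proof.
  eapply Rle_trans; [|apply W_coercive].
  apply Rmult_le_pos; [lra | apply Rplus_le_le_0_compat; apply pow2_ge_0].
Qed.

Lemma W_small_in_box r th : W r th < lam * rho ^ 2 -> Rabs (r - rd) <= rho /\ Rabs (th - th0) <= rho.
Proof.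
  intros H. assert (H1 := W_coercive r th).
  assert ((r - rd) ^ 2 + (th - th0) ^ 2 < rho ^ 2) by (apply Rmult_lt_reg_l with lam; lra).
  assert (0 <= (r - rd) ^ 2) by apply pow2_ge_0. assert (0 <= (th - th0) ^ 2) by apply pow2_ge_0.
  split; apply Rabs_le; split; nra.
Qed.

Lemma W_small_of_dist2 r th : dist2 r th rd th0 < rho * sqrt (lam / Lam) ->
  W r th < lam * rho ^ 2.
Proof.
  intros Hd. unfold dist2 in Hd.
  set (D := (r - rd) ^ 2 + (th - th0) ^ 2) in *.
  assert (HD : 0 <= D) by (unfold D; apply Rplus_le_le_0_compat; apply pow2_ge_0).
  assert (Hq : 0 < lam / Lam) by (apply Rdiv_lt_0_compat; lra).
  assert (D < rho ^ 2 * (lam / Lam)).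
  { rewrite <- (sqrt_sqrt D), <- (sqrt_sqrt (lam / Lam)) by lra.
    assert (0 <= sqrt D) by apply sqrt_pos. simpl pow. nra. }
  eapply Rle_lt_trans; [apply W_dominated|]. fold D.
  replace (lam * rho ^ 2) with (Lam * (rho ^ 2 * (lam / Lam))) by (field; lra).
  apply Rmult_lt_compat_l; lra.
Qed.

Section Trajectory.
Variables (F1 F2 : R -> R -> R) (T : Rbar) (r th : R -> R).
Hypothesis F_agree : forall a b, Rabs (a - rd) <= rho -> Rabs (b - th0) <= rho ->
  F1 a b = f1 a b /\ F2 a b = f2 a b.
Hypothesis solves : forall t, 0 < t -> Rbar_lt t T ->
  is_derive r t (F1 (r t) (th t)) /\ is_derive th t (F2 (r t) (th t)).
Hypothesis r_right : filterlim r (at_right 0) (locally (r 0)).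
Hypothesis th_right : filterlim th (at_right 0) (locally (th 0)).
Hypothesis W0_small : W (r 0) (th 0) < lam * rho ^ 2.

(* Extending the trajectory by its initial value to the left of 0 turns the
   one-sided data at 0 into plain continuity. *)
Let rx s := r (Rmax 0 s).
Let thx s := th (Rmax 0 s).
Let U s := W (rx s) (thx s) * exp (mu * s) - W (r 0) (th 0).

Lemma extension_continuous t : 0 <= t -> Rbar_lt t T -> continuous rx t /\ continuous thx t.
Proof.
  intros Ht HT. destruct (Req_dec t 0) as [->|Ht0].
  - split; apply continuous_Rmax_0_at_0; auto.
  - destruct (solves t ltac:(lra) HT) as [Dr Dth].
    split; apply continuous_Rmax_0; try lra;
      apply (ex_derive_continuous (K := R_AbsRing) (V := R_NormedModule)); eexists; eassumption.
Qed.

Lemma W_extension_continuous t : 0 <= t -> Rbar_lt t T ->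
  continuous (fun s => W (rx s) (thx s)) t.
Proof.
  intros Ht HT. destruct (extension_continuous t Ht HT) as [Hr Hth].
  apply (continuous_quad_form c1 c2 (fun s => rx s - rd) (fun s => thx s - th0)).
  - exact (continuous_minus rx (fun _ => rd) t Hr (continuous_const _ _)).
  - exact (continuous_minus thx (fun _ => th0) t Hth (continuous_const _ _)).
Qed.

Lemma U_continuous t : 0 <= t -> Rbar_lt t T -> continuous U t.
Proof.
  intros Ht HT.
  apply (continuous_minus (fun s => W (rx s) (thx s) * exp (mu * s)) (fun _ => W (r 0) (th 0)));
    [|apply continuous_const].
  apply continuous_Rmult; [exact (W_extension_continuous t Ht HT)|].
  apply continuous_exp_comp, continuous_Rmult_l, continuous_id.
Qed.

Lemma U_step t : 0 <= t -> Rbar_lt t T -> U t <= 0 -> exists eta, 0 < eta /\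
  forall s, t < s < t + eta -> Rbar_lt s T -> ex_derive U s /\ Derive U s <= 0.
Proof.
  intros Ht HT HUt.
  assert (He : 1 <= exp (mu * t)).
  { rewrite <- exp_0. destruct (Req_dec t 0) as [->|]; [rewrite Rmult_0_r; lra|].
    apply Rlt_le, exp_increasing. nra. }
  assert (HWt : W (rx t) (thx t) < lam * rho ^ 2).
  { assert (0 <= W (rx t) (thx t)) by apply W_nonneg.
    unfold U in HUt. nra. }
  destruct (proj1 (continuous_eps_delta _ t) (W_extension_continuous t Ht HT)
              (lam * rho ^ 2 - W (rx t) (thx t))) as [eta [Heta Hnear]]; [lra|].
  exists eta. split; auto. intros s Hs HsT.
  assert (Hs0 : 0 < s) by lra.
  assert (Hws : W (r s) (th s) < lam * rho ^ 2).
  { specialize (Hnear s ltac:(rewrite Rabs_pos_eq; lra)).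
    unfold rx, thx in Hnear. rewrite (Rmax_right 0 s) in Hnear by lra.
    unfold Rabs in Hnear; destruct Rcase_abs in Hnear; lra. }
  destruct (W_small_in_box _ _ Hws) as [Hbr Hbth].
  destruct (solves s Hs0 HsT) as [Dr Dth].
  destruct (F_agree _ _ Hbr Hbth) as [E1 E2]. rewrite E1 in Dr. rewrite E2 in Dth.
  assert (HD := is_derive_quad_form_exp c1 c2 mu rd th0 (W (r 0) (th 0)) rx thx s _ _
                  (is_derive_Rmax_0 r s _ Hs0 Dr) (is_derive_Rmax_0 th s _ Hs0 Dth)).
  split; [eexists; exact HD|].
  rewrite (is_derive_unique U s _ HD). unfold rx, thx. rewrite (Rmax_right 0 s) by lra.
  apply Rmult_le_0_r; [apply W_decrease; auto | apply Rlt_le, exp_pos].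
Qed.

Lemma lyapunov_exp_decay t : 0 <= t -> Rbar_lt t T ->
  W (r t) (th t) <= W (r 0) (th 0) * exp (- mu * t).
Proof.
  intros Ht HT.
  assert (HU : U t <= 0).
  { apply nonpos_propagates; auto.
    - unfold U, rx, thx. rewrite Rmax_left, Rmult_0_r, exp_0 by lra. lra.
    - intros s Hs. apply U_continuous; [lra|]. apply Rbar_le_lt_trans with t; [simpl; lra | exact HT].
    - intros s Hs HUs.
      assert (HsT : Rbar_lt s T) by (apply Rbar_le_lt_trans with t; [simpl; lra | exact HT]).
      destruct (U_step s ltac:(lra) HsT HUs) as [eta [Heta Hd]].
      exists eta. split; auto. intros u Hu Hut. apply Hd; auto.
      apply Rbar_le_lt_trans with t; [simpl; lra | exact HT]. }
  unfold U, rx, thx in HU. rewrite Rmax_right in HU by lra.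
  apply Rmult_le_compat_r with (r := exp (- mu * t)) in HU; [|apply Rlt_le, exp_pos].
  rewrite Rmult_minus_distr_r, Rmult_assoc, <- exp_plus in HU.
  replace (mu * t + - mu * t) with 0 in HU by ring.
  rewrite exp_0 in HU. lra.
Qed.

Lemma trajectory_in_box t : 0 <= t -> Rbar_lt t T ->
  Rabs (r t - rd) <= rho /\ Rabs (th t - th0) <= rho.
Proof.
  intros Ht HT. apply W_small_in_box.
  assert (exp (- mu * t) <= 1).
  { rewrite <- exp_0. destruct (Req_dec t 0) as [->|]; [rewrite Rmult_0_r; lra|].
    apply Rlt_le, exp_increasing. nra. }
  assert (0 <= W (r 0) (th 0)) by apply W_nonneg.
  assert (Hdecay := lyapunov_exp_decay t Ht HT). nra.
Qed.

Lemma dist2_exp_decay t : 0 <= t -> Rbar_lt t T ->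
  dist2 (r t) (th t) rd th0 <= sqrt (Lam / lam) * dist2 (r 0) (th 0) rd th0 * exp (- (mu / 2) * t).
Proof.
  intros Ht HT. unfold dist2.
  set (D0 := (r 0 - rd) ^ 2 + (th 0 - th0) ^ 2).
  set (Dt := (r t - rd) ^ 2 + (th t - th0) ^ 2).
  assert (HD0 : 0 <= D0) by (unfold D0; apply Rplus_le_le_0_compat; apply pow2_ge_0).
  assert (HDt : Dt <= Lam / lam * D0 * exp (- mu * t)).
  { apply Rmult_le_reg_l with lam; auto.
    replace (lam * (Lam / lam * D0 * exp (- mu * t))) with (Lam * D0 * exp (- mu * t)) by (field; lra).
    eapply Rle_trans; [apply W_coercive|]. eapply Rle_trans; [apply lyapunov_exp_decay; auto|].
    apply Rmult_le_compat_r; [apply Rlt_le, exp_pos | apply W_dominated]. }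
  assert (Eexp : exp (- mu * t) = exp (- (mu / 2) * t) ^ 2).
  { simpl. rewrite Rmult_1_r, <- exp_plus. f_equal. field. }
  apply Rle_trans with (sqrt (Lam / lam * D0 * exp (- mu * t))); [apply sqrt_le_1_alt; auto|].
  rewrite Eexp, !sqrt_mult, sqrt_pow2; try lra; try apply Rlt_le, exp_pos;
    try apply Rdiv_le_0_compat; try lra; try apply pow2_ge_0.
  apply Rmult_le_pos; [apply Rdiv_le_0_compat|]; lra.
Qed.
End Trajectory.
End Lyapunov.

(** * The closed-loop field near the equilibrium *)

Lemma r_a_spec (rd k : R) : 0 < rd -> 1 / rd < k ->
  0 < k /\ 1 < k * rd /\ 0 < r_a rd k /\ r_a rd k < rd /\
  r_a rd k ^ 2 = rd ^ 2 - 1 / k ^ 2 /\ sqrt (1 - (r_a rd k / rd) ^ 2) = 1 / (k * rd).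
Proof.
  intros hrd hk.
  assert (0 < 1 / rd) by (apply Rdiv_lt_0_compat; lra).
  assert (hk0 : 0 < k) by lra.
  assert (hkr : 1 < k * rd).
  { apply Rmult_lt_compat_r with (r := rd) in hk; auto.
    replace (1 / rd * rd) with 1 in hk by (field; lra). lra. }
  assert (hpos : 0 < rd ^ 2 - 1 / k ^ 2).
  { replace (rd ^ 2 - 1 / k ^ 2) with (((k * rd) ^ 2 - 1) / k ^ 2) by (field; lra).
    apply Rdiv_lt_0_compat; nra. }
  assert (hra2 : r_a rd k ^ 2 = rd ^ 2 - 1 / k ^ 2) by (apply pow2_sqrt; lra).
  assert (hra : 0 < r_a rd k) by (apply sqrt_lt_R0; lra).
  assert (r_a rd k < rd) by (assert (0 < 1 / k ^ 2) by (apply Rdiv_lt_0_compat; nra); nra).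
  repeat split; auto.
  replace (1 - (r_a rd k / rd) ^ 2) with ((1 / (k * rd)) ^ 2).
  - apply sqrt_pow2, Rlt_le, Rdiv_lt_0_compat; nra.
  - replace ((r_a rd k / rd) ^ 2) with (r_a rd k ^ 2 / rd ^ 2) by (field; lra).
    rewrite hra2. field. lra.
Qed.

(* cos (pi - asin q) = - sqrt (1 - q^2), valid since 0 <= ra / r <= 1. *)
Lemma f_th_expanded V k ra r th : 0 <= ra -> ra <= r -> 0 < r ->
  f_th V k ra r th = - k * V * sqrt (1 - (ra / r) ^ 2) + k * V * cos th + V * sin th / r.
Proof.
  intros h0 h1 h2. unfold f_th, omega. destruct (Rle_dec ra r); [|lra].
  rewrite Rtrigo_facts.cos_pi_minus, cos_asin, Rsqr_pow2; [ring|].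
  split; [|apply Rmult_le_reg_r with r; auto; unfold Rdiv; rewrite Rmult_assoc, Rinv_l]; try lra.
  apply Rle_trans with 0; [lra | apply Rdiv_le_0_compat; lra].
Qed.

Lemma derivable_pt_lim_linear_bound f x0 l : derivable_pt_lim f x0 l ->
  forall e, 0 < e -> exists d, 0 < d /\
  forall h, Rabs h <= d -> Rabs (f (x0 + h) - f x0 - l * h) <= e * Rabs h.
Proof.
  intros H e He. destruct (H e He) as [d Hd]. exists (d / 2).
  split; [generalize (cond_pos d); lra|].
  intros h Hh. destruct (Req_dec h 0) as [->|Hn].
  - rewrite Rplus_0_r, Rabs_R0. replace (f x0 - f x0 - l * 0) with 0 by ring. rewrite Rabs_R0. lra.
  - specialize (Hd h Hn ltac:(generalize (cond_pos d); lra)).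
    replace (f (x0 + h) - f x0 - l * h) with (h * ((f (x0 + h) - f x0) / h - l)) by (field; auto).
    rewrite Rabs_mult, Rmult_comm. apply Rmult_le_compat_r; [apply Rabs_pos | lra].
Qed.

(* The part of [f_th] at [th = PI/2] as a function of the radial offset [x = r - rd]. *)
Definition radial_drift V k ra rd x := - k * V * sqrt (1 - (ra / (rd + x)) ^ 2) + V / (rd + x).

Lemma radial_drift_0 V rd k : 0 < rd -> 1 / rd < k -> radial_drift V k (r_a rd k) rd 0 = 0.
Proof.
  intros hrd hk. destruct (r_a_spec rd k hrd hk) as [hk0 [hkr [_ [_ [_ hsq]]]]].
  unfold radial_drift. rewrite Rplus_0_r, hsq. field. lra.
Qed.

Lemma radial_drift_derivative V rd k : 0 < rd -> 1 / rd < k ->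
  derivable_pt_lim (radial_drift V k (r_a rd k) rd) 0 (- k ^ 2 * V).
Proof.
  intros hrd hk. destruct (r_a_spec rd k hrd hk) as [hk0 [hkr [hra [hrad [hra2 hsq]]]]].
  assert (Eq : 1 + - (r_a rd k * / rd * (r_a rd k * / rd * 1)) = (1 / (k * rd)) ^ 2).
  { replace (r_a rd k * / rd * (r_a rd k * / rd * 1)) with (r_a rd k ^ 2 / rd ^ 2) by (field; lra).
    rewrite hra2. field. lra. }
  assert (Hs : 0 < 1 / (k * rd)) by (apply Rdiv_lt_0_compat; nra).
  apply is_derive_Reals. unfold radial_drift. auto_derive; rewrite !Rplus_0_r.
  - rewrite Eq. repeat split; try lra. apply pow_lt; lra.
  - rewrite Eq, sqrt_pow2 by lra.
    transitivity (- (k ^ 2) * V * r_a rd k ^ 2 / rd ^ 2 - V / rd ^ 2); [field; split; lra|].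
    rewrite hra2. field. lra.
Qed.

Definition lin_rate k := k ^ 3 / (k ^ 2 + 1).
Definition err_gain V k := V * lin_rate k / (4 * (3 * k ^ 2 + 2 * k + 2)).
Definition decay_rate V k := V * lin_rate k / (2 * (2 * k ^ 2 + 2)).

Lemma lin_rate_spec k : 0 < k -> 0 < lin_rate k /\ lin_rate k <= k ^ 3 /\ lin_rate k <= k.
Proof.
  intros hk. unfold lin_rate.
  assert (0 < k ^ 3) by (apply pow_lt; lra). assert (0 < k ^ 2) by (apply pow_lt; lra).
  split; [apply Rdiv_lt_0_compat; lra|].
  split; apply Rmult_le_reg_r with (k ^ 2 + 1); try lra;
    unfold Rdiv; rewrite Rmult_assoc, Rinv_l by lra; simpl pow in *; nra.
Qed.

Lemma err_gain_pos V k : 0 < V -> 0 < k -> 0 < err_gain V k.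
Proof.
  intros hV hk. destruct (lin_rate_spec k hk) as [hm _]. unfold err_gain.
  apply Rdiv_lt_0_compat; [|assert (0 < k ^ 2) by (apply pow_lt; lra)]; nra.
Qed.

Lemma decay_rate_pos V k : 0 < V -> 0 < k -> 0 < decay_rate V k.
Proof.
  intros hV hk. destruct (lin_rate_spec k hk) as [hm _]. unfold decay_rate.
  apply Rdiv_lt_0_compat; [|assert (0 < k ^ 2) by (apply pow_lt; lra)]; nra.
Qed.

Lemma quad_form_lower k x y : 0 < k ->
  k ^ 2 / (2 * k ^ 2 + 2) * (x ^ 2 + y ^ 2) <= quad_form (3 * k ^ 2 / 2) k x y.
Proof.
  intros hk. unfold quad_form.
  assert (0 < k ^ 2) by (apply pow_lt; lra).
  assert (0 <= (k * x + y) ^ 2) by apply pow2_ge_0.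
  assert (0 <= x ^ 2) by apply pow2_ge_0. assert (0 <= y ^ 2) by apply pow2_ge_0.
  assert (k ^ 2 / (2 * k ^ 2 + 2) <= k ^ 2 /\ k ^ 2 / (2 * k ^ 2 + 2) <= 1 / 2) as [h1 h2].
  { split; apply Rmult_le_reg_r with (2 * k ^ 2 + 2); try lra;
      unfold Rdiv; rewrite Rmult_assoc, Rinv_l by lra; nra. }
  assert (k ^ 2 / (2 * k ^ 2 + 2) * x ^ 2 <= k ^ 2 * x ^ 2) by (apply Rmult_le_compat_r; lra).
  assert (k ^ 2 / (2 * k ^ 2 + 2) * y ^ 2 <= 1 / 2 * y ^ 2) by (apply Rmult_le_compat_r; lra).
  nra.
Qed.

Lemma quad_form_upper k x y :
  quad_form (3 * k ^ 2 / 2) k x y <= (2 * k ^ 2 + 2) * (x ^ 2 + y ^ 2).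
Proof.
  unfold quad_form.
  assert (0 <= (k * x - y) ^ 2) by apply pow2_ge_0.
  assert (0 <= x ^ 2) by apply pow2_ge_0. assert (0 <= y ^ 2) by apply pow2_ge_0. nra.
Qed.

Lemma linear_part_decrease V k x y : 0 < V -> 0 < k ->
  (3 * k ^ 2 * x + k * y) * (V * y) + (k * x + 2 * y) * (- (k ^ 2) * V * x - k * V * y)
  <= - V * lin_rate k * (x ^ 2 + y ^ 2).
Proof.
  intros hV hk. destruct (lin_rate_spec k hk) as [_ [hm3 hm1]].
  replace ((3 * k ^ 2 * x + k * y) * (V * y) + (k * x + 2 * y) * (- (k ^ 2) * V * x - k * V * y))
    with (- V * (k ^ 3 * x ^ 2 + k * y ^ 2)) by ring.
  assert (0 <= x ^ 2) by apply pow2_ge_0. assert (0 <= y ^ 2) by apply pow2_ge_0.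
  assert (lin_rate k * x ^ 2 <= k ^ 3 * x ^ 2) by (apply Rmult_le_compat_r; lra).
  assert (lin_rate k * y ^ 2 <= k * y ^ 2) by (apply Rmult_le_compat_r; lra). nra.
Qed.

Lemma error_part_bound V k x y E1 E2 : 0 < V -> 0 < k ->
  Rabs E1 <= err_gain V k * (Rabs x + Rabs y) -> Rabs E2 <= err_gain V k * (Rabs x + Rabs y) ->
  Rabs ((3 * k ^ 2 * x + k * y) * E1 + (k * x + 2 * y) * E2) <= V * lin_rate k / 2 * (x ^ 2 + y ^ 2).
Proof.
  intros hV hk h1 h2.
  destruct (lin_rate_spec k hk) as [hm _]. assert (heta := err_gain_pos V k hV hk).
  assert (0 < k ^ 2) by (apply pow_lt; lra).
  set (X := Rabs x). set (Y := Rabs y).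
  assert (hX : 0 <= X) by apply Rabs_pos. assert (hY : 0 <= Y) by apply Rabs_pos.
  assert (hx2 : x ^ 2 = X ^ 2) by (unfold X; rewrite <- !Rsqr_pow2; apply Rsqr_abs).
  assert (hy2 : y ^ 2 = Y ^ 2) by (unfold Y; rewrite <- !Rsqr_pow2; apply Rsqr_abs).
  assert (a1 : Rabs (3 * k ^ 2 * x + k * y) <= 3 * k ^ 2 * X + k * Y).
  { eapply Rle_trans; [apply Rabs_triang|].
    rewrite !Rabs_mult, (Rabs_pos_eq 3), (Rabs_pos_eq (k ^ 2)), (Rabs_pos_eq k) by lra. unfold X, Y. lra. }
  assert (a2 : Rabs (k * x + 2 * y) <= k * X + 2 * Y).
  { eapply Rle_trans; [apply Rabs_triang|]. rewrite !Rabs_mult, (Rabs_pos_eq k), (Rabs_pos_eq 2) by lra.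
    unfold X, Y. lra. }
  assert (b1 : Rabs (3 * k ^ 2 * x + k * y) * Rabs E1 <= (3 * k ^ 2 * X + k * Y) * (err_gain V k * (X + Y)))
    by (apply Rmult_le_compat; auto using Rabs_pos).
  assert (b2 : Rabs (k * x + 2 * y) * Rabs E2 <= (k * X + 2 * Y) * (err_gain V k * (X + Y)))
    by (apply Rmult_le_compat; auto using Rabs_pos).
  assert (b3 : (3 * k ^ 2 * X + k * Y) + (k * X + 2 * Y) <= (3 * k ^ 2 + 2 * k + 2) * (X + Y)).
  { assert (0 <= k ^ 2 * Y) by (apply Rmult_le_pos; lra).
    assert (0 <= k * X) by (apply Rmult_le_pos; lra).
    assert (0 <= k * Y) by (apply Rmult_le_pos; lra). nra. }
  assert (b4 : (X + Y) ^ 2 <= 2 * (X ^ 2 + Y ^ 2)) by (assert (0 <= (X - Y) ^ 2) by apply pow2_ge_0; nra).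
  assert (b5 : (3 * k ^ 2 + 2 * k + 2) * err_gain V k = V * lin_rate k / 4) by (unfold err_gain; field; nra).
  eapply Rle_trans; [apply Rabs_triang|]. rewrite !Rabs_mult, hx2, hy2.
  assert (0 <= err_gain V k * (X + Y)) by nra.
  assert (((3 * k ^ 2 * X + k * Y) + (k * X + 2 * Y)) * (err_gain V k * (X + Y))
          <= (3 * k ^ 2 + 2 * k + 2) * (X + Y) * (err_gain V k * (X + Y))) by (apply Rmult_le_compat_r; lra).
  assert (0 < V * lin_rate k) by nra.
  nra.
Qed.

Lemma quad_decrease_of_small_errors V k x y E1 E2 : 0 < V -> 0 < k ->
  Rabs E1 <= err_gain V k * (Rabs x + Rabs y) -> Rabs E2 <= err_gain V k * (Rabs x + Rabs y) ->
  (3 * k ^ 2 * x + k * y) * (V * y + E1) + (k * x + 2 * y) * (- (k ^ 2) * V * x - k * V * y + E2)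
  + decay_rate V k * quad_form (3 * k ^ 2 / 2) k x y <= 0.
Proof.
  intros hV hk h1 h2.
  assert (Lin := linear_part_decrease V k x y hV hk).
  assert (Err := Rle_trans _ _ _ (Rle_abs _) (error_part_bound V k x y E1 E2 hV hk h1 h2)).
  destruct (lin_rate_spec k hk) as [hm _].
  assert (0 < k ^ 2) by (apply pow_lt; lra).
  assert (Mu : decay_rate V k * quad_form (3 * k ^ 2 / 2) k x y <= V * lin_rate k / 2 * (x ^ 2 + y ^ 2)).
  { replace (V * lin_rate k / 2 * (x ^ 2 + y ^ 2))
      with (decay_rate V k * ((2 * k ^ 2 + 2) * (x ^ 2 + y ^ 2))) by (unfold decay_rate; field; nra).
    apply Rmult_le_compat_l; [apply Rlt_le, decay_rate_pos; auto | apply quad_form_upper]. }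
  nra.
Qed.

Section LocalDecrease.
Variables (V rd k rho : R).
Hypothesis hV : 0 < V.
Hypothesis hrd : 0 < rd.
Hypothesis hk : 1 / rd < k.
Hypothesis hrho : rho <= (rd - r_a rd k) / 2.
Hypothesis sin_close : forall h, Rabs h <= rho ->
  Rabs (sin h - h) <= err_gain V k / (3 * V * (k + 1)) * Rabs h.
Hypothesis cos_close : forall h, Rabs h <= rho ->
  Rabs (cos h - 1) <= err_gain V k * rd / (6 * V) * Rabs h.
Hypothesis radial_close : forall h, Rabs h <= rho ->
  Rabs (radial_drift V k (r_a rd k) rd h + k ^ 2 * V * h) <= err_gain V k / 3 * Rabs h.

Lemma f_r_error_bound y : Rabs y <= rho ->
  Rabs (V * (sin y - y)) <= err_gain V k * Rabs y.
Proof.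
  intros Hy. destruct (r_a_spec rd k hrd hk) as [hk0 _].
  assert (heta := err_gain_pos V k hV hk0).
  rewrite Rabs_mult, (Rabs_pos_eq V) by lra.
  apply Rle_trans with (V * (err_gain V k / (3 * V * (k + 1)) * Rabs y));
    [apply Rmult_le_compat_l; auto; lra|].
  replace (V * (err_gain V k / (3 * V * (k + 1)) * Rabs y))
    with (err_gain V k * Rabs y * / (3 * (k + 1))) by (field; lra).
  assert (0 <= err_gain V k * Rabs y) by (apply Rmult_le_pos; [lra | apply Rabs_pos]).
  assert (/ (3 * (k + 1)) <= 1) by (rewrite <- Rinv_1; apply Rinv_le_contravar; lra).
  nra.
Qed.

Lemma f_th_error_bound x y : Rabs x <= rho -> Rabs y <= rho ->
  Rabs ((radial_drift V k (r_a rd k) rd x + k ^ 2 * V * x) - k * V * (sin y - y)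
        + V * (cos y - 1) / (rd + x)) <= err_gain V k * (Rabs x + Rabs y).
Proof.
  intros Hx Hy. destruct (r_a_spec rd k hrd hk) as [hk0 [_ [hra _]]].
  assert (heta := err_gain_pos V k hV hk0).
  assert (hr : rd / 2 <= rd + x) by (apply Rabs_le_between in Hx; lra).
  assert (c1 := radial_close x Hx).
  assert (c2 : Rabs (k * V * (sin y - y)) <= err_gain V k / 3 * Rabs y).
  { rewrite Rabs_mult, (Rabs_pos_eq (k * V)) by nra.
    apply Rle_trans with (k * V * (err_gain V k / (3 * V * (k + 1)) * Rabs y));
      [apply Rmult_le_compat_l; [nra | auto]|].
    replace (k * V * (err_gain V k / (3 * V * (k + 1)) * Rabs y))
      with (err_gain V k / 3 * Rabs y * (k / (k + 1))) by (field; lra).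
    assert (0 <= err_gain V k / 3 * Rabs y) by (apply Rmult_le_pos; [lra | apply Rabs_pos]).
    assert (k / (k + 1) <= 1) by (apply Rmult_le_reg_r with (k + 1); [lra|];
      unfold Rdiv; rewrite Rmult_assoc, Rinv_l by lra; lra).
    assert (0 <= k / (k + 1)) by (apply Rlt_le, Rdiv_lt_0_compat; lra). nra. }
  assert (c3 : Rabs (V * (cos y - 1) / (rd + x)) <= err_gain V k / 3 * Rabs y).
  { unfold Rdiv. rewrite !Rabs_mult, (Rabs_pos_eq V), (Rabs_pos_eq (/ (rd + x)))
      by (try apply Rlt_le, Rinv_0_lt_compat; lra).
    assert (hir : / (rd + x) <= 2 / rd).
    { replace (2 / rd) with (/ (rd / 2)) by (field; lra). apply Rinv_le_contravar; lra. }
    assert (0 <= Rabs (cos y - 1)) by apply Rabs_pos.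
    apply Rle_trans with (V * (err_gain V k * rd / (6 * V) * Rabs y) * (2 / rd)).
    - apply Rmult_le_compat; try apply Rmult_le_pos; try lra.
      + apply Rlt_le, Rinv_0_lt_compat. lra.
      + apply Rmult_le_compat_l; auto; lra.
    - right. field. lra. }
  eapply Rle_trans; [apply Rabs_triang|].
  eapply Rle_trans; [apply Rplus_le_compat_r, Rabs_triang|]. rewrite Rabs_Ropp.
  assert (0 <= err_gain V k * Rabs x) by (apply Rmult_le_pos; [lra | apply Rabs_pos]).
  assert (0 <= err_gain V k * Rabs y) by (apply Rmult_le_pos; [lra | apply Rabs_pos]).
  lra.
Qed.

Lemma decrease_near_equilibrium r th : Rabs (r - rd) <= rho -> Rabs (th - PI / 2) <= rho ->
  (2 * (3 * k ^ 2 / 2) * (r - rd) + k * (th - PI / 2)) * f_r V r th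
  + (k * (r - rd) + 2 * (th - PI / 2)) * f_th V k (r_a rd k) r th
  + decay_rate V k * quad_form (3 * k ^ 2 / 2) k (r - rd) (th - PI / 2) <= 0.
Proof.
  intros Hx Hy. destruct (r_a_spec rd k hrd hk) as [hk0 [_ [hra [hrad _]]]].
  set (x := r - rd) in *. set (y := th - PI / 2) in *.
  assert (hr : r = rd + x) by (unfold x; ring).
  assert (hth : th = PI / 2 + y) by (unfold y; ring).
  assert (Hx' := proj1 (Rabs_le_between _ _) Hx).
  assert (Ef1 : f_r V r th = V * y + V * (sin y - y)).
  { unfold f_r. rewrite hth, (sin_cos y). ring. }
  assert (Ef2 : f_th V k (r_a rd k) r th = - (k ^ 2) * V * x - k * V * y +
      ((radial_drift V k (r_a rd k) rd x + k ^ 2 * V * x) - k * V * (sin y - y)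
       + V * (cos y - 1) / (rd + x))).
  { rewrite f_th_expanded by lra. unfold radial_drift. rewrite <- hr, hth.
    rewrite sin_plus, cos_plus, sin_PI2, cos_PI2. field. lra. }
  rewrite Ef1, Ef2. replace (2 * (3 * k ^ 2 / 2)) with (3 * k ^ 2) by field.
  assert (B1 := f_r_error_bound y Hy).
  assert (B2 := f_th_error_bound x y Hx Hy).
  apply quad_decrease_of_small_errors; auto.
  eapply Rle_trans; [exact B1|]. apply Rmult_le_compat_l.
  - apply Rlt_le, err_gain_pos; lra.
  - generalize (Rabs_pos x); lra.
Qed.
End LocalDecrease.

Lemma decrease_radius V rd k : 0 < V -> 0 < rd -> 1 / rd < k ->
  exists rho, 0 < rho /\ rho <= (rd - r_a rd k) / 2 /\
  forall r th, Rabs (r - rd) <= rho -> Rabs (th - PI / 2) <= rho ->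
    (2 * (3 * k ^ 2 / 2) * (r - rd) + k * (th - PI / 2)) * f_r V r th
    + (k * (r - rd) + 2 * (th - PI / 2)) * f_th V k (r_a rd k) r th
    + decay_rate V k * quad_form (3 * k ^ 2 / 2) k (r - rd) (th - PI / 2) <= 0.
Proof.
  intros hV hrd hk. destruct (r_a_spec rd k hrd hk) as [hk0 [_ [hra [hrad _]]]].
  assert (heta := err_gain_pos V k hV hk0).
  destruct (derivable_pt_lim_linear_bound sin 0 (cos 0) (derivable_pt_lim_sin 0)
              (err_gain V k / (3 * V * (k + 1)))) as [ds [hds Hds]];
    [apply Rdiv_lt_0_compat; nra|].
  destruct (derivable_pt_lim_linear_bound cos 0 (- sin 0) (derivable_pt_lim_cos 0)
              (err_gain V k * rd / (6 * V))) as [dc [hdc Hdc]];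
    [apply Rdiv_lt_0_compat; nra|].
  destruct (derivable_pt_lim_linear_bound _ 0 _ (radial_drift_derivative V rd k hrd hk)
              (err_gain V k / 3)) as [dh [hdh Hdh]]; [lra|].
  set (rho := Rmin (Rmin ds dc) (Rmin dh ((rd - r_a rd k) / 2))).
  assert (Hmin := fun a b => conj (Rmin_l a b) (Rmin_r a b)).
  destruct (Hmin (Rmin ds dc) (Rmin dh ((rd - r_a rd k) / 2))), (Hmin ds dc),
    (Hmin dh ((rd - r_a rd k) / 2)).
  exists rho. split; [repeat apply Rmin_glb_lt; lra|]. split; [unfold rho; lra|].
  apply decrease_near_equilibrium; auto; [unfold rho; lra | intros h Hh ..].
  - specialize (Hds h ltac:(unfold rho in *; lra)).
    rewrite Rplus_0_l, sin_0, cos_0, Rminus_0_r, Rmult_1_l in Hds. exact Hds.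
  - specialize (Hdc h ltac:(unfold rho in *; lra)).
    rewrite Rplus_0_l, sin_0, cos_0, Ropp_0, Rmult_0_l, Rminus_0_r in Hdc. exact Hdc.
  - specialize (Hdh h ltac:(unfold rho in *; lra)).
    rewrite Rplus_0_l, radial_drift_0, Rminus_0_r in Hdh by auto.
    replace (radial_drift V k (r_a rd k) rd h + k ^ 2 * V * h)
      with (radial_drift V k (r_a rd k) rd h - - k ^ 2 * V * h) by ring. exact Hdh.
Qed.

(** * A globally Lipschitz modification of the field *)

Lemma sin_lipschitz : lipschitz 1 sin.
Proof.
  intros a b. destruct (MVT_gen sin b a cos) as [c [_ Hc]].
  - intros; apply is_derive_Reals, derivable_pt_lim_sin.
  - intros; apply continuity_sin.
  - rewrite Hc, Rabs_mult, Rmult_comm, (Rmult_comm 1).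
    apply Rmult_le_compat_l; [apply Rabs_pos | apply Rabs_le, COS_bound].
Qed.

Lemma cos_lipschitz : lipschitz 1 cos.
Proof.
  intros a b. destruct (MVT_gen cos b a (fun x => - sin x)) as [c [_ Hc]].
  - intros; apply is_derive_Reals, derivable_pt_lim_cos.
  - intros; apply continuity_cos.
  - rewrite Hc, Rabs_mult, Rabs_Ropp, Rmult_comm, (Rmult_comm 1).
    apply Rmult_le_compat_l; [apply Rabs_pos | apply Rabs_le, SIN_bound].
Qed.

Lemma sqrt_diff_le c a b : 0 < c -> c <= a -> c <= b ->
  Rabs (sqrt a - sqrt b) <= Rabs (a - b) / (2 * sqrt c).
Proof.
  intros hc ha hb.
  assert (sc := sqrt_lt_R0 c hc).
  assert (sqrt c <= sqrt a) by (apply sqrt_le_1; lra).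
  assert (sqrt c <= sqrt b) by (apply sqrt_le_1; lra).
  assert (E : (sqrt a - sqrt b) * (sqrt a + sqrt b) = a - b).
  { replace ((sqrt a - sqrt b) * (sqrt a + sqrt b)) with (sqrt a * sqrt a - sqrt b * sqrt b) by ring.
    rewrite !sqrt_sqrt by lra. ring. }
  apply Rmult_le_reg_r with (2 * sqrt c); [lra|].
  replace (Rabs (a - b) / (2 * sqrt c) * (2 * sqrt c)) with (Rabs (a - b)) by (field; lra).
  rewrite <- E, Rabs_mult, (Rabs_pos_eq (sqrt a + sqrt b)) by lra.
  apply Rmult_le_compat_l; [apply Rabs_pos | lra].
Qed.

Lemma inv_diff_le m r r' : 0 < m -> m <= r -> m <= r' -> Rabs (/ r - / r') <= Rabs (r - r') / m ^ 2.
Proof.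
  intros h h1 h2.
  replace (/ r - / r') with ((r' - r) / (r * r')) by (field; lra).
  unfold Rdiv. rewrite Rabs_mult, Rabs_minus_sym. apply Rmult_le_compat_l; [apply Rabs_pos|].
  rewrite Rabs_pos_eq by (apply Rlt_le, Rinv_0_lt_compat; nra).
  apply Rinv_le_contravar; [nra|]. simpl. rewrite Rmult_1_r. apply Rmult_le_compat; lra.
Qed.

Lemma inv_sq_diff_le m r r' : 0 < m -> m <= r -> m <= r' ->
  Rabs (/ r ^ 2 - / r' ^ 2) <= 2 * Rabs (r - r') / m ^ 3.
Proof.
  intros h h1 h2.
  replace (/ r ^ 2 - / r' ^ 2) with ((/ r - / r') * (/ r + / r')) by (field; lra).
  rewrite Rabs_mult.
  assert (i1 := inv_diff_le m r r' h h1 h2).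
  assert (i2 : Rabs (/ r + / r') <= 2 / m).
  { assert (0 < / r) by (apply Rinv_0_lt_compat; lra).
    assert (0 < / r') by (apply Rinv_0_lt_compat; lra).
    assert (/ r <= / m) by (apply Rinv_le_contravar; lra).
    assert (/ r' <= / m) by (apply Rinv_le_contravar; lra).
    rewrite Rabs_pos_eq; unfold Rdiv; lra. }
  apply Rle_trans with (Rabs (r - r') / m ^ 2 * (2 / m)).
  - apply Rmult_le_compat; auto using Rabs_pos.
  - right. field. lra.
Qed.

Definition clamp a b z := Rmax a (Rmin b z).

Lemma clamp_in a b z : a <= b -> a <= clamp a b z <= b.
Proof. intros. unfold clamp, Rmax, Rmin. repeat destruct Rle_dec; lra. Qed.

Lemma clamp_id a b z : a <= z <= b -> clamp a b z = z.
Proof. intros. unfold clamp, Rmax, Rmin. repeat destruct Rle_dec; lra. Qed.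

Lemma clamp_lipschitz a b : a <= b -> lipschitz 1 (clamp a b).
Proof.
  intros Hab z z'. rewrite Rmult_1_l.
  unfold clamp, Rmax, Rmin. repeat destruct Rle_dec; unfold Rabs; repeat destruct Rcase_abs; lra.
Qed.

Lemma f_r_bounded V a b : 0 <= V -> Rabs (f_r V a b) <= V.
Proof.
  intros hV. unfold f_r. rewrite Rabs_mult, Rabs_Ropp, (Rabs_pos_eq V) by lra.
  assert (Rabs (cos b) <= 1) by (apply Rabs_le, COS_bound). nra.
Qed.

Section ClampedField.
Variables (V rd k rho : R).
Hypothesis hV : 0 < V.
Hypothesis hrd : 0 < rd.
Hypothesis hk : 1 / rd < k.
Hypothesis hrho : 0 < rho.
Hypothesis hrho_ra : rho <= (rd - r_a rd k) / 2.

Let ra := r_a rd k.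
Let rm := rd - rho.
Let cl := clamp (rd - rho) (rd + rho).

Lemma clamp_radius_bounds a : ra < rm /\ rd / 2 <= rm /\ rm <= cl a <= rd + rho.
Proof.
  destruct (r_a_spec rd k hrd hk) as [_ [_ [hra [hrad _]]]].
  unfold ra, rm, cl. split; [|split]; [lra .. | apply clamp_in; lra].
Qed.

Lemma clamped_f_th_expanded a b :
  f_th V k ra (cl a) b = - k * V * sqrt (1 - (ra / cl a) ^ 2) + k * V * cos b + V * sin b / cl a.
Proof.
  destruct (clamp_radius_bounds a) as [? [? ?]].
  destruct (r_a_spec rd k hrd hk) as [_ [_ [hra _]]].
  apply f_th_expanded; unfold ra in *; lra.
Qed.

Let cmin := 1 - (ra / rm) ^ 2.

Lemma cmin_pos : 0 < cmin.
Proof.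
  destruct (clamp_radius_bounds 0) as [? [? _]].
  destruct (r_a_spec rd k hrd hk) as [_ [_ [hra _]]].
  assert (0 <= ra / rm < 1).
  { split; [apply Rlt_le, Rdiv_lt_0_compat; unfold ra; lra|].
    apply Rmult_lt_reg_r with rm; [lra|]. unfold Rdiv. rewrite Rmult_assoc, Rinv_l; lra. }
  unfold cmin. nra.
Qed.

Lemma cmin_le a : cmin <= 1 - (ra / cl a) ^ 2.
Proof.
  destruct (clamp_radius_bounds a) as [? [? ?]].
  destruct (r_a_spec rd k hrd hk) as [_ [_ [hra _]]].
  assert (ra / cl a <= ra / rm) by (apply Rmult_le_compat_l; [unfold ra | apply Rinv_le_contravar]; lra).
  assert (0 <= ra / cl a) by (apply Rlt_le, Rdiv_lt_0_compat; unfold ra; lra).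
  unfold cmin. nra.
Qed.

Let L1 := ra ^ 2 / (rm ^ 3 * sqrt cmin).

Lemma sqrt_term_lipschitz : lipschitz L1 (fun a => sqrt (1 - (ra / cl a) ^ 2)).
Proof.
  intros a a'. assert (hc := cmin_pos). assert (hsc := sqrt_lt_R0 cmin hc).
  destruct (clamp_radius_bounds a) as [? [? ?]], (clamp_radius_bounds a') as [_ [_ ?]].
  eapply Rle_trans; [apply (sqrt_diff_le cmin); auto using cmin_le|].
  replace (1 - (ra / cl a) ^ 2 - (1 - (ra / cl a') ^ 2)) with (ra ^ 2 * (/ cl a' ^ 2 - / cl a ^ 2))
    by (field; lra).
  rewrite Rabs_mult, (Rabs_pos_eq (ra ^ 2)) by apply pow2_ge_0.
  assert (i := inv_sq_diff_le rm (cl a') (cl a) ltac:(lra) ltac:(lra) ltac:(lra)).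
  assert (j := clamp_lipschitz (rd - rho) (rd + rho) ltac:(lra) a' a).
  fold cl in j. rewrite Rmult_1_l, (Rabs_minus_sym a') in j.
  apply Rle_trans with (ra ^ 2 * (2 * Rabs (a - a') / rm ^ 3) / (2 * sqrt cmin)).
  - unfold Rdiv. apply Rmult_le_compat_r; [apply Rlt_le, Rinv_0_lt_compat; lra|].
    apply Rmult_le_compat_l; [apply pow2_ge_0|]. eapply Rle_trans; [apply i|].
    unfold Rdiv. apply Rmult_le_compat_r; [apply Rlt_le, Rinv_0_lt_compat, pow_lt; lra | lra].
  - right. unfold L1. field. lra.
Qed.

Lemma sin_over_radius_diff a a' b b' :
  Rabs (V * sin b / cl a - V * sin b' / cl a') <= V / rm * Rabs (b - b') + V / rm ^ 2 * Rabs (a - a').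
Proof.
  destruct (clamp_radius_bounds a) as [? [? ?]], (clamp_radius_bounds a') as [_ [_ ?]].
  replace (V * sin b / cl a - V * sin b' / cl a')
    with (V * ((sin b - sin b') * / cl a) + V * (sin b' * (/ cl a - / cl a'))) by (field; lra).
  eapply Rle_trans; [apply Rabs_triang|]. rewrite !Rabs_mult, (Rabs_pos_eq V) by lra.
  rewrite (Rabs_pos_eq (/ cl a)) by (apply Rlt_le, Rinv_0_lt_compat; lra).
  assert (/ cl a <= / rm) by (apply Rinv_le_contravar; lra).
  assert (0 < / cl a) by (apply Rinv_0_lt_compat; lra).
  assert (Rabs (sin b') <= 1) by (apply Rabs_le, SIN_bound).
  assert (i := inv_diff_le rm (cl a) (cl a') ltac:(lra) ltac:(lra) ltac:(lra)).
  assert (j := clamp_lipschitz (rd - rho) (rd + rho) ltac:(lra) a a'). fold cl in j.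
  assert (s := sin_lipschitz b b'). rewrite Rmult_1_l in j, s.
  assert (t1 : Rabs (sin b - sin b') * / cl a <= Rabs (b - b') * / rm)
    by (apply Rmult_le_compat; auto using Rabs_pos; lra).
  assert (t2 : Rabs (sin b') * Rabs (/ cl a - / cl a') <= 1 * (Rabs (a - a') / rm ^ 2)).
  { apply Rmult_le_compat; auto using Rabs_pos. eapply Rle_trans; [apply i|].
    unfold Rdiv. apply Rmult_le_compat_r; [apply Rlt_le, Rinv_0_lt_compat, pow_lt; lra | lra]. }
  unfold Rdiv in *.
  assert (V * (Rabs (sin b - sin b') * / cl a) <= V * (Rabs (b - b') * / rm))
    by (apply Rmult_le_compat_l; lra).
  assert (V * (Rabs (sin b') * Rabs (/ cl a - / cl a')) <= V * (1 * (Rabs (a - a') * / rm ^ 2)))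
    by (apply Rmult_le_compat_l; lra).
  lra.
Qed.

Lemma clamped_f_th_bounded a b : Rabs (f_th V k ra (cl a) b) <= V + 2 * k * V + V / rm.
Proof.
  rewrite clamped_f_th_expanded. destruct (clamp_radius_bounds a) as [? [? ?]].
  destruct (r_a_spec rd k hrd hk) as [hk0 _].
  assert (Hs : 0 <= sqrt (1 - (ra / cl a) ^ 2) <= 1).
  { split; [apply sqrt_pos|]. apply Rle_trans with (sqrt 1); [apply sqrt_le_1_alt | rewrite sqrt_1; lra].
    generalize (pow2_ge_0 (ra / cl a)). lra. }
  assert (Rabs (cos b) <= 1) by (apply Rabs_le, COS_bound).
  assert (Rabs (sin b) <= 1) by (apply Rabs_le, SIN_bound).
  assert (/ cl a <= / rm) by (apply Rinv_le_contravar; lra).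
  assert (0 < / cl a) by (apply Rinv_0_lt_compat; lra).
  eapply Rle_trans; [apply Rabs_triang|]. eapply Rle_trans; [apply Rplus_le_compat_r, Rabs_triang|].
  assert (0 < k * V) by nra.
  assert (k * V * sqrt (1 - (ra / cl a) ^ 2) <= k * V) by nra.
  assert (k * V * Rabs (cos b) <= k * V) by nra.
  assert (V * Rabs (sin b) * / cl a <= V * / rm)
    by (apply Rmult_le_compat; [apply Rmult_le_pos; [lra | apply Rabs_pos] | lra | nra | lra]).
  replace (V * sin b / cl a) with (V * sin b * / cl a) by reflexivity.
  rewrite !Rabs_mult, Rabs_Ropp, (Rabs_pos_eq k), (Rabs_pos_eq V), (Rabs_pos_eq (sqrt _)),
    (Rabs_pos_eq (/ cl a)) by lra.
  lra.
Qed.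

Lemma clamped_field_lipschitz a b a' b' :
  Rabs (f_r V a b - f_r V a' b') + Rabs (f_th V k ra (cl a) b - f_th V k ra (cl a') b')
  <= (V + k * V + V / rm + k * V * L1 + V / rm ^ 2) * (Rabs (a - a') + Rabs (b - b')).
Proof.
  rewrite !clamped_f_th_expanded. destruct (r_a_spec rd k hrd hk) as [hk0 _].
  destruct (clamp_radius_bounds a) as [? [? ?]].
  assert (hL1 : 0 <= L1).
  { unfold L1. apply Rdiv_le_0_compat; [apply pow2_ge_0|].
    apply Rmult_lt_0_compat; [apply pow_lt; lra | apply sqrt_lt_R0, cmin_pos]. }
  assert (e1 : Rabs (f_r V a b - f_r V a' b') <= V * Rabs (b - b')).
  { unfold f_r. replace (- V * cos b - - V * cos b') with (- V * (cos b - cos b')) by ring.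
    rewrite Rabs_mult, Rabs_Ropp, (Rabs_pos_eq V) by lra.
    apply Rmult_le_compat_l; [lra|]. rewrite <- (Rmult_1_l (Rabs (b - b'))). apply cos_lipschitz. }
  assert (e2 : Rabs (k * V * (sqrt (1 - (ra / cl a) ^ 2) - sqrt (1 - (ra / cl a') ^ 2)))
               <= k * V * (L1 * Rabs (a - a'))).
  { rewrite Rabs_mult, (Rabs_pos_eq (k * V)) by nra.
    apply Rmult_le_compat_l; [nra | apply sqrt_term_lipschitz]. }
  assert (e3 : Rabs (k * V * (cos b - cos b')) <= k * V * (1 * Rabs (b - b'))).
  { rewrite Rabs_mult, (Rabs_pos_eq (k * V)) by nra.
    apply Rmult_le_compat_l; [nra | apply cos_lipschitz]. }
  assert (e4 := sin_over_radius_diff a a' b b').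
  assert (T1 := Rabs_triang (- (k * V * (sqrt (1 - (ra / cl a) ^ 2) - sqrt (1 - (ra / cl a') ^ 2)))
                             + k * V * (cos b - cos b')) (V * sin b / cl a - V * sin b' / cl a')).
  assert (T2 := Rabs_triang (- (k * V * (sqrt (1 - (ra / cl a) ^ 2) - sqrt (1 - (ra / cl a') ^ 2))))
                            (k * V * (cos b - cos b'))).
  rewrite Rabs_Ropp in T2.
  replace (- (k * V * (sqrt (1 - (ra / cl a) ^ 2) - sqrt (1 - (ra / cl a') ^ 2)))
           + k * V * (cos b - cos b') + (V * sin b / cl a - V * sin b' / cl a'))
    with (- k * V * sqrt (1 - (ra / cl a) ^ 2) + k * V * cos b + V * sin b / cl a -
          (- k * V * sqrt (1 - (ra / cl a') ^ 2) + k * V * cos b' + V * sin b' / cl a')) in T1 by ring.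
  assert (hA := Rabs_pos (a - a')). assert (hB := Rabs_pos (b - b')).
  assert (0 < V / rm) by (apply Rdiv_lt_0_compat; lra).
  assert (0 < V / rm ^ 2) by (apply Rdiv_lt_0_compat; [lra | apply pow_lt; lra]).
  assert (0 <= k * V * L1) by (apply Rmult_le_pos; nra).
  assert (0 <= V * Rabs (a - a')) by nra. assert (0 <= k * V * Rabs (a - a')) by nra.
  assert (0 <= V / rm * Rabs (a - a')) by nra. assert (0 <= k * V * L1 * Rabs (b - b')) by nra.
  assert (0 <= V / rm ^ 2 * Rabs (b - b')) by nra.
  lra.
Qed.
End ClampedField.

Lemma clamped_field_bounded_lipschitz V rd k rho : 0 < V -> 0 < rd -> 1 / rd < k -> 0 < rho ->
  rho <= (rd - r_a rd k) / 2 ->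
  let F2 := fun a b => f_th V k (r_a rd k) (clamp (rd - rho) (rd + rho) a) b in
  exists B L, 0 < B /\ 0 < L /\
   (forall a b, Rabs (f_r V a b) <= B) /\ (forall a b, Rabs (F2 a b) <= B) /\
   (forall a b a' b', Rabs (f_r V a b - f_r V a' b') + Rabs (F2 a b - F2 a' b')
                      <= L * (Rabs (a - a') + Rabs (b - b'))).
Proof.
  intros hV hrd hk hrho hrho_ra F2.
  destruct (clamp_radius_bounds rd k rho hrd hk hrho hrho_ra 0) as [_ [hrm _]].
  destruct (r_a_spec rd k hrd hk) as [hk0 _].
  assert (0 < V / (rd - rho)) by (apply Rdiv_lt_0_compat; lra).
  assert (0 < V / (rd - rho) ^ 2) by (apply Rdiv_lt_0_compat; [lra | apply pow_lt; lra]).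
  set (L1 := r_a rd k ^ 2 / ((rd - rho) ^ 3 * sqrt (1 - (r_a rd k / (rd - rho)) ^ 2))).
  assert (0 <= k * V * L1).
  { apply Rmult_le_pos; [nra|]. apply Rdiv_le_0_compat; [apply pow2_ge_0|].
    apply Rmult_lt_0_compat; [apply pow_lt; lra | apply sqrt_lt_R0, (cmin_pos rd k rho); auto]. }
  exists (V + 2 * k * V + V / (rd - rho)), (V + k * V + V / (rd - rho) + k * V * L1 + V / (rd - rho) ^ 2).
  split; [nra|]. split; [nra|]. split; [|split].
  - intros a b. eapply Rle_trans; [apply f_r_bounded; lra | nra].
  - intros a b. apply clamped_f_th_bounded; auto.
  - intros a b a' b'. apply clamped_field_lipschitz; auto.
Qed.

(** * Local exponential stability *)

Lemma equilibrium V rd k : 0 < rd -> 1 / rd < k ->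
  f_r V rd (PI / 2) = 0 /\ f_th V k (r_a rd k) rd (PI / 2) = 0.
Proof.
  intros hrd hk. destruct (r_a_spec rd k hrd hk) as [hk0 [hkr [hra [hrad [_ hsq]]]]].
  split; [unfold f_r; rewrite cos_PI2; ring|].
  rewrite f_th_expanded, hsq, cos_PI2, sin_PI2 by lra. field. lra.
Qed.

Section Stability.
Variables (V rd k rho : R).
Hypothesis hV : 0 < V.
Hypothesis hrd : 0 < rd.
Hypothesis hk : 1 / rd < k.
Hypothesis hrho : 0 < rho.
Hypothesis hrho_ra : rho <= (rd - r_a rd k) / 2.
Hypothesis decrease : forall r th, Rabs (r - rd) <= rho -> Rabs (th - PI / 2) <= rho ->
  (2 * (3 * k ^ 2 / 2) * (r - rd) + k * (th - PI / 2)) * f_r V r th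
  + (k * (r - rd) + 2 * (th - PI / 2)) * f_th V k (r_a rd k) r th
  + decay_rate V k * quad_form (3 * k ^ 2 / 2) k (r - rd) (th - PI / 2) <= 0.

Let lam := k ^ 2 / (2 * k ^ 2 + 2).
Let Lam := 2 * k ^ 2 + 2.

Lemma lyapunov_constants : 0 < k /\ 0 < decay_rate V k /\ 0 < lam /\ 0 < Lam.
Proof.
  destruct (r_a_spec rd k hrd hk) as [hk0 _].
  assert (0 < k ^ 2) by (apply pow_lt; lra).
  split; [|split; [apply decay_rate_pos|split]]; auto; unfold lam, Lam;
    [apply Rdiv_lt_0_compat|]; lra.
Qed.

Lemma solution_decay (T : Rbar) r th : is_solution V k (r_a rd k) T r th ->
  dist2 (r 0) (th 0) rd (PI / 2) < rho * sqrt (lam / Lam) ->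
  forall t, 0 <= t -> Rbar_lt t T ->
  dist2 (r t) (th t) rd (PI / 2)
  <= sqrt (Lam / lam) * dist2 (r 0) (th 0) rd (PI / 2) * exp (- (decay_rate V k / 2) * t).
Proof.
  intros [Hder [Hr Hth]] Hd. destruct lyapunov_constants as [hk0 [hmu [hlam hLam]]].
  apply (dist2_exp_decay rd (PI / 2) (3 * k ^ 2 / 2) k (decay_rate V k) lam Lam rho
           (f_r V) (f_th V k (r_a rd k))) with (F1 := f_r V) (F2 := f_th V k (r_a rd k)); auto.
  - intros; apply quad_form_lower; lra.
  - intros; apply quad_form_upper.
  - apply (W_small_of_dist2 rd (PI / 2) (3 * k ^ 2 / 2) k lam Lam rho); auto.
    intros; apply quad_form_upper.
Qed.

Lemma global_solution r0 th0 : dist2 r0 th0 rd (PI / 2) < rho * sqrt (lam / Lam) ->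
  exists r th, is_solution V k (r_a rd k) p_infty r th /\ r 0 = r0 /\ th 0 = th0.
Proof.
  intros Hd. destruct lyapunov_constants as [hk0 [hmu [hlam hLam]]].
  set (F2 := fun a b => f_th V k (r_a rd k) (clamp (rd - rho) (rd + rho) a) b).
  destruct (clamped_field_bounded_lipschitz V rd k rho) as [B [L [hB [hL [HB1 [HB2 HL]]]]]]; auto.
  destruct (picard_solution (f_r V) F2 B L r0 th0 hB hL HB1 HB2 HL)
    as [X [Y [HX0 [HY0 [HXc [HYc HXd]]]]]].
  assert (Hagree : forall a b, Rabs (a - rd) <= rho -> Rabs (b - PI / 2) <= rho ->
            f_r V a b = f_r V a b /\ F2 a b = f_th V k (r_a rd k) a b).
  { intros a b Ha _. split; auto. unfold F2. rewrite clamp_id; auto.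
    apply Rabs_le_between in Ha. lra. }
  assert (Hbox : forall t, 0 <= t -> Rabs (X t - rd) <= rho).
  { intros t Ht.
    apply (trajectory_in_box rd (PI / 2) (3 * k ^ 2 / 2) k (decay_rate V k) lam rho
             (f_r V) (f_th V k (r_a rd k))) with (F1 := f_r V) (F2 := F2) (T := p_infty) (th := Y);
      auto using continuous_at_right.
    - intros; apply quad_form_lower; lra.
    - rewrite HX0, HY0. apply (W_small_of_dist2 rd (PI / 2) (3 * k ^ 2 / 2) k lam Lam rho); auto.
      intros; apply quad_form_upper.
    - exact I. }
  exists X, Y. split; [|auto]. split; [|split; apply continuous_at_right; auto].
  intros t Ht _. destruct (HXd t Ht) as [D1 D2]. split; auto.
  unfold F2 in D2. rewrite clamp_id in D2; auto.
  generalize (proj1 (Rabs_le_between _ _) (Hbox t ltac:(lra))). lra.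
Qed.
End Stability.

Theorem theorem2 (V rd k : R) (hV : 0 < V) (hrd : 0 < rd) (hk : 1 / rd < k) :
  locally_exp_stable V k (r_a rd k) rd (PI / 2).
Proof.
  destruct (equilibrium V rd k hrd hk) as [Er Eth].
  destruct (decrease_radius V rd k hV hrd hk) as [rho [hrho [hrho_ra Hdec]]].
  destruct (lyapunov_constants V rd k hV hrd hk) as [hk0 [hmu [hlam hLam]]].
  set (lam := k ^ 2 / (2 * k ^ 2 + 2)) in *. set (Lam := 2 * k ^ 2 + 2) in *.
  split; [exact Er|]. split; [exact Eth|].
  exists (rho * sqrt (lam / Lam)), (sqrt (Lam / lam)), (decay_rate V k / 2).
  split; [apply Rmult_lt_0_compat; [|apply sqrt_lt_R0, Rdiv_lt_0_compat]; lra|].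
  split; [apply sqrt_lt_R0, Rdiv_lt_0_compat; lra|]. split; [lra|].
  intros r0 th0 Hd. split.
  - exact (global_solution V rd k rho hV hrd hk hrho hrho_ra Hdec r0 th0 Hd).
  - intros T r th Hsol <- <-.
    exact (solution_decay V rd k rho hV hrd hk hrho Hdec T r th Hsol Hd).
Qed.
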